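(* Let $M$ be a mode for a program $P$ such that $P$ is safe w.r.t. $M$ and $P$ satisfies $M$. Let $\mathit{Eqs}$ be a conjunction of equations and $G_0,G_1,G_2$ be goals, where no disequation occurs in $G_1$ and all derivations from the goal $(G_0,G_1)$ using $P$ are consistent with $M$. Then: (i) $(G_0,G_1,\mathit{Eqs},G_2)\longmapsto^*_P\mathit{true}$ iff $(G_0,\mathit{Eqs},G_1,G_2)\longmapsto^*_P\mathit{true}$; (ii) $\mu(P,(G_0,G_1,\mathit{Eqs},G_2))=\mu(P,(G_0,\mathit{Eqs},G_1,G_2))$; (iii) $\nu(P,(G_0,G_1,\mathit{Eqs},G_2))=\nu(P,(G_0,\mathit{Eqs},G_1,G_2))$.
   Context: Predicate symbols $\mathit{true}$, $=$, $\neq$ are basic, all others non-basic. Basic atoms: $\mathit{true}$, $t_1=t_2$ (equation), $t_1\neq t_2$ (disequation); non-basic atoms $p(t_1,\dots,t_m)$, $p$ non-basic. A goal is a conjunction of atoms ('','' associative, neutral element $\mathit{true}$). A clause $C$ is $A\leftarrow G$ with non-basic head $hd(C)$ and body $bd(C)$; a program is a set of clauses. All mgu's are relevant and idempotent. A variable $X$ is a local variable of goal $G$ in clause $H\leftarrow G_1,G,G_2$ iff $X\in vars(G)-vars(H,G_1,G_2)$. Operational semantics: (1) $(t_1=t_2,G)\longmapsto_P G\vartheta$ if $t_1,t_2$ unify with mgu $\vartheta$; (2) $(t_1\neq t_2,G)\longmapsto_P G$ if not unifiable; (3) $(A,G)\longmapsto_P(bd(C),G)\vartheta$ if $A$ is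 non-basic, $C$ a renamed apart clause of $P$ and $\vartheta$ an mgu of $A$ and $hd(C)$. A derivation is $G_0\longmapsto_P\cdots\longmapsto_P G_z$, of length $z$; successful if $G_z=\mathit{true}$ (then $G_0$ succeeds). $\longmapsto^*_P$ is the reflexive-transitive closure. For a derivation $\delta$, $\lambda(\delta)$ is the number of goals $G_i$ in $\delta$ of the form $(A,K)$ with $A$ non-basic. $\mu(P,G)$ is the minimum of $\lambda(\delta)$ over successful derivations $\delta$ of $G$ in $P$, and $\infty$ if $G$ does not succeed; $\nu(P,G)$ is the minimum length of a successful derivation of $G$ in $P$, and $\infty$ if none. Modes: a mode for non-basic $p$ of arity $h$ is $p(m_1,\dots,m_h)$, $m_i\in\{+,?\}$; $t_i$ is an input argument iff $m_i=+$; variables in input arguments are input variables; a mode for a program contains exactly one mode per non-basic predicate occurring in it. An atom satisfies $M$ iff $M$ has a mode for its predicate and its input arguments are ground. $P$ satisfies $M$ iff for every non-basic $A_0$ satisfying $M$ and every non-basic $A$ and goal $G$ with $A_0\longmapsto^*_P(A,G)$, $A$ satisfies $M$. A derivation $G_0\longmapsto_P\cdots\longmapsto_P G_n$ is consistent with $M$ iff for $i<n$, whenever the leftmost atom of $G_i$ is a non-basic atom $A$, $A$ satisfies $M$. A clause $C$ is safe w.r.t. $M$ iff each variable of each disequation $t_1\neq t_2$ in $bd(C)$ is an input variable of $hd(C)$ or a local variable of $t_1\neq t_2$ in $C$; a program is safe iff all its clauses are. *)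

From Stdlib Require Import List Arith ClassicalEpsilon Relation_Operators.
Import ListNotations.

Inductive term : Type :=
| Var (x : nat)
| Fn (f : nat) (args : list term).

Definition subst := nat -> term.

Fixpoint tsubst (s : subst) (t : term) : term :=
  match t with
  | Var x => s x
  | Fn f ts => Fn f (map (tsubst s) ts)
  end.

Fixpoint tvars (t : term) : list nat :=
  match t with
  | Var x => [x]
  | Fn _ ts => flat_map tvars ts
  end.

Definition lvars (ts : list term) : list nat := flat_map tvars ts.

(* Basic atoms: equations and disequations; the basic atom [true] is the
   neutral element of "," and is represented by the empty conjunction. *)
Inductive atom : Type :=
| AEq (t1 t2 : term)
| ANeq (t1 t2 : term)
| APred (p : nat) (ts : list term).

Definition goal := list atom.

Definition asubst (s : subst) (a : atom) : atom :=
  match a with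
  | AEq t1 t2 => AEq (tsubst s t1) (tsubst s t2)
  | ANeq t1 t2 => ANeq (tsubst s t1) (tsubst s t2)
  | APred p ts => APred p (map (tsubst s) ts)
  end.

Definition avars (a : atom) : list nat :=
  match a with
  | AEq t1 t2 | ANeq t1 t2 => tvars t1 ++ tvars t2
  | APred _ ts => lvars ts
  end.

Definition gsubst (s : subst) (G : goal) : goal := map (asubst s) G.
Definition gvars (G : goal) : list nat := flat_map avars G.

Record clause : Type := Clause { hd_pred : nat; hd_args : list term; bd : goal }.
Definition hd (C : clause) : atom := APred (hd_pred C) (hd_args C).
Definition csubst (s : subst) (C : clause) : clause :=
  Clause (hd_pred C) (map (tsubst s) (hd_args C)) (gsubst s (bd C)).
Definition cvars (C : clause) : list nat := lvars (hd_args C) ++ gvars (bd C).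

Definition program := clause -> Prop.

Definition unifies (s : subst) (ts ss : list term) : Prop :=
  map (tsubst s) ts = map (tsubst s) ss.

Definition unifiable (ts ss : list term) : Prop := exists s, unifies s ts ss.

(* th is a relevant, idempotent most general unifier of ts and ss *)
Definition is_mgu (th : subst) (ts ss : list term) : Prop :=
  unifies th ts ss /\
  (forall sg, unifies sg ts ss -> exists rho, forall x, sg x = tsubst rho (th x)) /\
  (forall x, tsubst th (th x) = th x) /\
  (forall x, th x <> Var x ->
     In x (lvars ts ++ lvars ss) /\
     (forall y, In y (tvars (th x)) -> In y (lvars ts ++ lvars ss))).

Definition renaming (rho : subst) : Prop :=
  exists f : nat -> nat,
    (forall x, rho x = Var (f x)) /\
    (forall x y, f x = f y -> x = y) /\
    (forall y, exists x, f x = y).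

Definition disjoint (l1 l2 : list nat) : Prop := forall x, In x l1 -> ~ In x l2.

Inductive step (P : program) : goal -> goal -> Prop :=
| step_eq : forall t1 t2 G th,
    is_mgu th [t1] [t2] ->
    step P (AEq t1 t2 :: G) (gsubst th G)
| step_neq : forall t1 t2 G,
    ~ unifiable [t1] [t2] ->
    step P (ANeq t1 t2 :: G) G
| step_res : forall p ts G C rho th,
    P C -> renaming rho ->
    disjoint (cvars (csubst rho C)) (gvars (APred p ts :: G)) ->
    hd_pred C = p ->
    is_mgu th ts (hd_args (csubst rho C)) ->
    step P (APred p ts :: G) (gsubst th (bd (csubst rho C) ++ G)).

Definition steps (P : program) : goal -> goal -> Prop := clos_refl_trans goal (step P).

(* A derivation G_0 |-> ... |-> G_z is a nonempty list of goals; its length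
   is z = (number of goals) - 1. *)
Definition derivation (P : program) (d : list goal) : Prop :=
  forall i, S i < length d -> step P (nth i d []) (nth (S i) d []).

Definition successful_derivation_of (P : program) (G : goal) (d : list goal) : Prop :=
  (exists rest, d = G :: rest) /\ derivation P d /\ last d [] = [].

Definition deriv_length (d : list goal) : nat := length d - 1.

Definition starts_nonbasic (G : goal) : bool :=
  match G with APred _ _ :: _ => true | _ => false end.

Definition lambda (d : list goal) : nat := length (filter starts_nonbasic d).

(* minimum of a set of naturals; None encodes infinity (empty set) *)
Definition min_of (Q : nat -> Prop) : option nat :=
  match excluded_middle_informative
          (exists n, Q n /\ forall m, Q m -> n <= m) with
  | left H => Some (proj1_sig (constructive_indefinite_description _ H))
  | right _ => None
  end.

Definition mu (P : program) (G : goal) : option nat :=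
  min_of (fun n => exists d, successful_derivation_of P G d /\ lambda d = n).

Definition nu (P : program) (G : goal) : option nat :=
  min_of (fun n => exists d, successful_derivation_of P G d /\ deriv_length d = n).

(* A mode assigns to a predicate symbol the list (m_1,...,m_h), true = '+'. *)
Definition mode := nat -> option (list bool).

Definition input_args (ms : list bool) (ts : list term) : list term :=
  map snd (filter fst (combine ms ts)).

Definition input_vars (ms : list bool) (ts : list term) : list nat :=
  lvars (input_args ms ts).

Definition atom_satisfies (M : mode) (a : atom) : Prop :=
  match a with
  | APred p ts => exists ms, M p = Some ms /\ length ms = length ts /\
                             input_vars ms ts = []
  | _ => False
  end.

Definition occurs_in_program (P : program) (p : nat) (ts : list term) : Prop :=
  exists C, P C /\ In (APred p ts) (hd C :: bd C).

Definition mode_for_program (M : mode) (P : program) : Prop :=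
  (forall p, (exists ms, M p = Some ms) <-> (exists ts, occurs_in_program P p ts)) /\
  (forall p ts ms, occurs_in_program P p ts -> M p = Some ms -> length ms = length ts).

Definition program_satisfies (P : program) (M : mode) : Prop :=
  forall A0, atom_satisfies M A0 ->
  forall p ts G, steps P [A0] (APred p ts :: G) -> atom_satisfies M (APred p ts).

Definition consistent_with (M : mode) (d : list goal) : Prop :=
  forall i p ts K, S i < length d -> nth i d [] = APred p ts :: K ->
    atom_satisfies M (APred p ts).

Definition clause_safe (M : mode) (C : clause) : Prop :=
  forall i t1 t2, nth_error (bd C) i = Some (ANeq t1 t2) ->
  forall x, In x (tvars t1 ++ tvars t2) ->
    (exists ms, M (hd_pred C) = Some ms /\ In x (input_vars ms (hd_args C))) \/
    ~ In x (avars (hd C) ++ gvars (firstn i (bd C)) ++ gvars (skipn (S i) (bd C))).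

Definition program_safe (M : mode) (P : program) : Prop :=
  forall C, P C -> clause_safe M C.

(* The equations [Eqs] are moved leftwards past [G1] one atom at a time.  Two equations
   commute, and an equation commutes with a resolution step, because solving two
   unification problems in either order yields most general unifiers of the joint problem,
   hence variant goals, and successful derivations are invariant under variants (same
   length, same number of goals headed by a non-basic atom).  An equation also commutes
   with a disequation none of whose variables it mentions.  So the invariant is that every
   disequation descending from [G1] has private variables.  Initially [G1] has none; one
   introduced by resolving an atom of [G1] comes from a clause body, and by safety each of
   its variables is either local, hence fresh after renaming apart, or an input variable of
   the head, which the mgu grounds because the selected atom satisfies the mode
   (consistency).  Steps on the prefix [G0] are performed in lockstep on both goals. *)

From Stdlib Require Import List Arith Lia Classical ClassicalEpsilon Relation_Operators
  Operators_Properties.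
Import ListNotations.

(** * Substitutions *)

Fixpoint term_nested_ind (Q : term -> Prop) (HV : forall x, Q (Var x))
  (HF : forall f ts, Forall Q ts -> Q (Fn f ts)) (t : term) : Q t :=
  match t with
  | Var x => HV x
  | Fn f ts => HF f ts ((fix all (l : list term) : Forall Q l :=
       match l with
       | [] => Forall_nil Q
       | t :: l => Forall_cons t (term_nested_ind Q HV HF t) (all l)
       end) ts)
  end.

Definition scomp (s1 s2 : subst) : subst := fun x => tsubst s2 (s1 x).

Definition left_inverse_on (e' e : subst) (V : list nat) : Prop :=
  forall x, In x V -> tsubst e' (e x) = Var x.

Lemma ex_in_app (l1 l2 : list nat) (Q : nat -> Prop) :
  (exists x, In x (l1 ++ l2) /\ Q x) <-> (exists x, In x l1 /\ Q x) \/ (exists x, In x l2 /\ Q x).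
Proof.
  split; [intros [x [Hx HQ]]; apply in_app_or in Hx as [Hx|Hx]; eauto|].
  intros [[x [Hx HQ]]|[x [Hx HQ]]]; exists x; rewrite in_app_iff; auto.
Qed.

Lemma tsubst_ext t s1 s2 :
  (forall x, In x (tvars t) -> s1 x = s2 x) -> tsubst s1 t = tsubst s2 t.
Proof.
  induction t as [x|f ts IH] using term_nested_ind; simpl; intros Hs; auto.
  f_equal. induction IH as [|t ts Ht _ IHts]; simpl in *; auto.
  f_equal; [apply Ht|apply IHts]; intros x Hx; apply Hs, in_or_app; auto.
Qed.

Lemma tsubst_comp t s1 s2 : tsubst s2 (tsubst s1 t) = tsubst (scomp s1 s2) t.
Proof.
  induction t as [x|f ts IH] using term_nested_ind; simpl; auto.
  f_equal. rewrite map_map. induction IH; simpl; f_equal; auto.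
Qed.

Lemma tsubst_Var t : tsubst Var t = t.
Proof.
  induction t as [x|f ts IH] using term_nested_ind; simpl; auto.
  f_equal. induction IH; simpl; f_equal; auto.
Qed.

Lemma in_tvars_tsubst t s y :
  In y (tvars (tsubst s t)) <-> exists x, In x (tvars t) /\ In y (tvars (s x)).
Proof.
  induction t as [x|f ts IH] using term_nested_ind; simpl.
  - split; [eauto|]. intros [x' [[<-|[]] Hy]]; auto.
  - induction IH as [|t ts Ht _ IHts]; simpl; [firstorder|].
    rewrite in_app_iff, Ht, IHts, ex_in_app. tauto.
Qed.

Lemma tsubst_fixed t s : tsubst s t = t -> forall x, In x (tvars t) -> s x = Var x.
Proof.
  induction t as [x|f ts IH] using term_nested_ind; simpl; intros Hfix y Hy.
  - destruct Hy as [<-|[]]; auto.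
  - injection Hfix as Hfix. induction IH; simpl in *; [destruct Hy|].
    injection Hfix as H1 H2. apply in_app_or in Hy as [Hy|Hy]; eauto.
Qed.

Section SubstLists.

Variables (A : Type) (vars : A -> list nat) (sub : subst -> A -> A).

Lemma in_flat_map_sub
  (Hsub : forall a s y, In y (vars (sub s a)) <-> exists x, In x (vars a) /\ In y (tvars (s x)))
  l s y :
  In y (flat_map vars (map (sub s) l)) <->
  exists x, In x (flat_map vars l) /\ In y (tvars (s x)).
Proof.
  induction l as [|a l IH]; simpl; [firstorder|].
  rewrite in_app_iff, Hsub, IH, ex_in_app. tauto.
Qed.

Lemma map_sub_ext
  (Hext : forall a s1 s2, (forall x, In x (vars a) -> s1 x = s2 x) -> sub s1 a = sub s2 a)
  l s1 s2 :
  (forall x, In x (flat_map vars l) -> s1 x = s2 x) -> map (sub s1) l = map (sub s2) l.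
Proof.
  intros Hs. induction l as [|a l IH]; simpl in *; auto.
  f_equal; [apply Hext|apply IH]; intros x Hx; apply Hs, in_or_app; auto.
Qed.

Lemma map_sub_comp (Hcomp : forall a s1 s2, sub s2 (sub s1 a) = sub (scomp s1 s2) a) l s1 s2 :
  map (sub s2) (map (sub s1) l) = map (sub (scomp s1 s2)) l.
Proof. rewrite map_map. apply map_ext. intros; apply Hcomp. Qed.

Lemma map_sub_fixed
  (Hfix : forall a s, sub s a = a -> forall x, In x (vars a) -> s x = Var x) l s :
  map (sub s) l = l -> forall x, In x (flat_map vars l) -> s x = Var x.
Proof.
  intros Hl. induction l as [|a l IH]; simpl in *; intros x Hx; [destruct Hx|].
  injection Hl as H1 H2. apply in_app_or in Hx as [Hx|Hx]; eauto.
Qed.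

End SubstLists.

Lemma in_lvars_subst ts s y :
  In y (lvars (map (tsubst s) ts)) <-> exists x, In x (lvars ts) /\ In y (tvars (s x)).
Proof. apply (in_flat_map_sub _ tvars tsubst in_tvars_tsubst). Qed.

Lemma map_tsubst_ext ts s1 s2 :
  (forall x, In x (lvars ts) -> s1 x = s2 x) -> map (tsubst s1) ts = map (tsubst s2) ts.
Proof. apply (map_sub_ext _ tvars tsubst tsubst_ext). Qed.

Lemma map_tsubst_comp ts s1 s2 :
  map (tsubst s2) (map (tsubst s1) ts) = map (tsubst (scomp s1 s2)) ts.
Proof. apply (map_sub_comp _ tsubst tsubst_comp). Qed.

Lemma map_tsubst_id_on ts s :
  (forall x, In x (lvars ts) -> s x = Var x) -> map (tsubst s) ts = ts.
Proof.
  intros Hs. rewrite (map_tsubst_ext _ _ Var Hs). rewrite <- (map_id ts) at 2.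
  apply map_ext, tsubst_Var.
Qed.

Lemma lvars_singleton t : lvars [t] = tvars t.
Proof. unfold lvars. simpl. apply app_nil_r. Qed.

Lemma lvars_app A B : lvars (A ++ B) = lvars A ++ lvars B.
Proof. apply flat_map_app. Qed.

Lemma in_avars_asubst a s y :
  In y (avars (asubst s a)) <-> exists x, In x (avars a) /\ In y (tvars (s x)).
Proof.
  destruct a; simpl; [| |apply in_lvars_subst];
    rewrite in_app_iff, !in_tvars_tsubst, ex_in_app; tauto.
Qed.

Lemma asubst_ext a s1 s2 :
  (forall x, In x (avars a) -> s1 x = s2 x) -> asubst s1 a = asubst s2 a.
Proof.
  destruct a; simpl; intros Hs; f_equal; try apply map_tsubst_ext; auto;
    apply tsubst_ext; intros; apply Hs, in_or_app; auto.
Qed.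

Lemma asubst_comp a s1 s2 : asubst s2 (asubst s1 a) = asubst (scomp s1 s2) a.
Proof. destruct a; simpl; f_equal; auto using tsubst_comp, map_tsubst_comp. Qed.

Lemma asubst_fixed a s : asubst s a = a -> forall x, In x (avars a) -> s x = Var x.
Proof.
  destruct a; simpl; intros Hfix x Hx; injection Hfix; intros.
  1,2: apply in_app_or in Hx as [Hx|Hx]; [apply (tsubst_fixed t1)|apply (tsubst_fixed t2)]; auto.
  eapply (map_sub_fixed _ tvars tsubst tsubst_fixed); eauto.
Qed.

Lemma in_gvars_gsubst G s y :
  In y (gvars (gsubst s G)) <-> exists x, In x (gvars G) /\ In y (tvars (s x)).
Proof. unfold gsubst. apply (in_flat_map_sub _ avars asubst in_avars_asubst). Qed.

Lemma gsubst_ext G s1 s2 :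
  (forall x, In x (gvars G) -> s1 x = s2 x) -> gsubst s1 G = gsubst s2 G.
Proof. unfold gsubst. apply (map_sub_ext _ avars asubst asubst_ext). Qed.

Lemma gsubst_comp G s1 s2 : gsubst s2 (gsubst s1 G) = gsubst (scomp s1 s2) G.
Proof. unfold gsubst. apply (map_sub_comp _ asubst asubst_comp). Qed.

Lemma gsubst_fixed G s : gsubst s G = G -> forall x, In x (gvars G) -> s x = Var x.
Proof. unfold gsubst. apply (map_sub_fixed _ avars asubst asubst_fixed). Qed.

Lemma gsubst_id_on G s : (forall x, In x (gvars G) -> s x = Var x) -> gsubst s G = G.
Proof.
  intros Hs. rewrite (gsubst_ext _ _ Var Hs). rewrite <- (map_id G) at 2.
  apply map_ext. intros []; simpl; f_equal; auto using tsubst_Var, map_tsubst_id_on.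
Qed.

Lemma gsubst_Var G : gsubst Var G = G.
Proof. apply gsubst_id_on. reflexivity. Qed.

Lemma gsubst_cons s a G : gsubst s (a :: G) = asubst s a :: gsubst s G.
Proof. reflexivity. Qed.

Lemma gsubst_app s G H : gsubst s (G ++ H) = gsubst s G ++ gsubst s H.
Proof. apply map_app. Qed.

Lemma in_gvars_app G H x : In x (gvars (G ++ H)) <-> In x (gvars G) \/ In x (gvars H).
Proof. unfold gvars. rewrite flat_map_app, in_app_iff. tauto. Qed.

Lemma in_gvars_cons a G x : In x (gvars (a :: G)) <-> In x (avars a) \/ In x (gvars G).
Proof. unfold gvars. simpl. rewrite in_app_iff. tauto. Qed.

(** * Unification *)

Lemma unifies_cons s a b ls rs :
  unifies s (a :: ls) (b :: rs) <-> tsubst s a = tsubst s b /\ unifies s ls rs.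
Proof.
  unfold unifies; simpl. split; [intros H; injection H; auto|intros [-> ->]; auto].
Qed.

Lemma unifies_length s ts ss : unifies s ts ss -> length ts = length ss.
Proof. intros H. rewrite <- (length_map (tsubst s) ts), H, length_map. reflexivity. Qed.

Lemma unifies_app s A B A' B' : length A = length B ->
  unifies s (A ++ A') (B ++ B') <-> unifies s A B /\ unifies s A' B'.
Proof.
  revert B. induction A as [|a A IH]; intros [|b B] Hl; try discriminate; simpl; [firstorder|].
  rewrite !unifies_cons, IH by auto. tauto.
Qed.

Fixpoint tsize (t : term) : nat :=
  match t with Var _ => 1 | Fn _ ts => S (list_sum (map tsize ts)) end.

Definition lsize (ts : list term) : nat := list_sum (map tsize ts).

Lemma tsize_var_le t s x : In x (tvars t) -> tsize (s x) <= tsize (tsubst s t).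
Proof.
  induction t as [y|f ts IH] using term_nested_ind; simpl; intros Hx.
  - destruct Hx as [<-|[]]; auto.
  - induction IH as [|t ts Ht _ IHts]; simpl in *; [destruct Hx|].
    apply in_app_or in Hx as [Hx|Hx]; [specialize (Ht Hx)|specialize (IHts Hx)]; lia.
Qed.

Lemma occurs_check t s x : In x (tvars t) -> t <> Var x -> s x <> tsubst s t.
Proof.
  intros Hx Ht Heq. destruct t as [y|f ts]; simpl in Hx.
  - destruct Hx as [<-|[]]; congruence.
  - assert (Hlt : tsize (s x) < tsize (tsubst s (Fn f ts))).
    { simpl. clear Ht Heq. induction ts as [|t ts IH]; simpl in *; [destruct Hx|].
      apply in_app_or in Hx as [Hx|Hx];
        [pose proof (tsize_var_le t s x Hx)|specialize (IH Hx)]; lia. }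
    rewrite Heq in Hlt. lia.
Qed.

Definition nvars (V : list nat) : nat := length (nodup Nat.eq_dec V).

Lemma nvars_incl V W : incl V W -> nvars V <= nvars W.
Proof.
  intros HVW. apply NoDup_incl_length; [apply NoDup_nodup|].
  intros y. rewrite !nodup_In. apply HVW.
Qed.

Lemma nvars_incl_lt V W x : incl V W -> In x W -> ~ In x V -> nvars V < nvars W.
Proof.
  intros HVW HxW HxV. unfold nvars.
  assert (length (nodup Nat.eq_dec V) <= length (remove Nat.eq_dec x (nodup Nat.eq_dec W))).
  { apply NoDup_incl_length; [apply NoDup_nodup|]. intros y. rewrite nodup_In. intros Hy.
    apply in_in_remove; [congruence|]. rewrite nodup_In; auto. }
  pose proof (remove_length_lt Nat.eq_dec (nodup Nat.eq_dec W) x) as Hrem.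
  rewrite nodup_In in Hrem. specialize (Hrem HxW). lia.
Qed.

(* Solved forms of unification problems (Martelli-Montanari), read as idempotent
   substitutions through [bindings_subst]. *)
Definition bindings := list (nat * term).

Definition dom (S : bindings) : list nat := map fst S.

Definition solved_form (S : bindings) : Prop :=
  NoDup (dom S) /\ forall x t, In (x, t) S -> forall y, In y (dom S) -> ~ In y (tvars t).

Definition solves_bindings (s : subst) (S : bindings) : Prop :=
  forall x t, In (x, t) S -> s x = tsubst s t.

Definition bindings_subst (S : bindings) : subst := fun x =>
  match find (fun p => Nat.eqb (fst p) x) S with Some p => snd p | None => Var x end.

Definition solved_form_of (ls rs : list term) (S : bindings) : Prop :=
  solved_form S /\ (forall s, unifies s ls rs <-> solves_bindings s S) /\
  forall x t, In (x, t) S ->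
    In x (lvars ls ++ lvars rs) /\ incl (tvars t) (lvars ls ++ lvars rs).

Lemma bindings_subst_cases S x :
  (bindings_subst S x = Var x /\ ~ In x (dom S)) \/
  (exists t, In (x, t) S /\ bindings_subst S x = t).
Proof.
  unfold bindings_subst. destruct (find _ S) as [[y t]|] eqn:E.
  - right. apply find_some in E as [Hin Hy]. apply Nat.eqb_eq in Hy. simpl in Hy; subst. eauto.
  - left. split; auto. intros Hx. apply in_map_iff in Hx as [[y t] [Hy Hin]]. simpl in Hy; subst.
    apply (find_none _ _ E) in Hin. simpl in Hin. rewrite Nat.eqb_refl in Hin. discriminate.
Qed.

Lemma dom_functional S x t t' : NoDup (dom S) -> In (x, t) S -> In (x, t') S -> t = t'.
Proof.
  induction S as [|[y u] S IH]; simpl; [tauto|]. intros Hnd Hin Hin'.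
  inversion Hnd as [|? ? Hy Hnd']; subst.
  destruct Hin as [Hin|Hin], Hin' as [Hin'|Hin']; try congruence; eauto; exfalso; apply Hy;
    apply in_map_iff; eexists; (split; [|eassumption]); simpl; congruence.
Qed.

Lemma bindings_subst_in S x t : NoDup (dom S) -> In (x, t) S -> bindings_subst S x = t.
Proof.
  intros Hnd Hin. destruct (bindings_subst_cases S x) as [[_ Hx]|[t' [Hin' ->]]].
  - exfalso. apply Hx, in_map_iff. exists (x, t); auto.
  - eapply dom_functional; eauto.
Qed.

Lemma solves_bindings_subst s S : solves_bindings s S ->
  forall v, tsubst s (bindings_subst S v) = s v.
Proof.
  intros Hs v. destruct (bindings_subst_cases S v) as [[-> _]|[t [Ht ->]]]; auto.
  symmetry. apply Hs; auto.
Qed.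

Lemma tvars_bindings_subst S V v w : solved_form S ->
  (forall x t, In (x, t) S -> incl (tvars t) V) ->
  In w (tvars (bindings_subst S v)) -> ~ In w (dom S) /\ (In w V \/ w = v).
Proof.
  intros [_ Hsol] HV Hw. destruct (bindings_subst_cases S v) as [[Hv Hn]|[t [Ht Hv]]];
    rewrite Hv in Hw.
  - destruct Hw as [<-|[]]; auto.
  - split; [intros Hd; apply (Hsol v t Ht w Hd Hw)|left; apply (HV v t Ht w Hw)].
Qed.

Lemma solved_form_of_equiv ls rs ls' rs' S :
  (forall s, unifies s ls rs <-> unifies s ls' rs') ->
  incl (lvars ls' ++ lvars rs') (lvars ls ++ lvars rs) ->
  solved_form_of ls' rs' S -> solved_form_of ls rs S.
Proof.
  intros Hu Hv [Hsol [He Hr]]. split; [|split]; auto.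
  - intros s. rewrite Hu. apply He.
  - intros x t Hxt. destruct (Hr x t Hxt). split; auto. eapply incl_tran; eauto.
Qed.

Definition bind (x : nat) (t : term) : subst := fun y => if Nat.eqb y x then t else Var y.

Lemma in_tvars_bind x t z w : ~ In x (tvars t) -> In w (tvars (bind x t z)) ->
  w <> x /\ (w = z \/ In w (tvars t)).
Proof.
  unfold bind. destruct (Nat.eqb_spec z x) as [->|Hz]; intros Hx Hw.
  - split; auto. congruence.
  - destruct Hw as [<-|[]]; auto.
Qed.

Lemma tsubst_bind s x t : s x = tsubst s t -> forall v, tsubst s (bind x t v) = s v.
Proof. intros Hx v. unfold bind. destruct (Nat.eqb_spec v x); subst; auto. Qed.

Lemma unifies_map_tsubst s e ls rs : (forall v, tsubst s (e v) = s v) ->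
  unifies s (map (tsubst e) ls) (map (tsubst e) rs) <-> unifies s ls rs.
Proof.
  intros He. unfold unifies. rewrite !map_tsubst_comp.
  rewrite !(map_tsubst_ext _ (scomp e s) s) by (intros; apply He). tauto.
Qed.

Lemma in_lvars_bind x t ls rs w : ~ In x (tvars t) ->
  In w (lvars (map (tsubst (bind x t)) ls) ++ lvars (map (tsubst (bind x t)) rs)) ->
  w <> x /\ In w (lvars (Var x :: ls) ++ lvars (t :: rs)).
Proof.
  intros Hxt Hw. cbn [lvars flat_map tvars]. rewrite in_app_iff in *.
  destruct Hw as [Hw|Hw]; apply in_lvars_subst in Hw as [z [Hz Hw]];
    apply (in_tvars_bind _ _ _ _ Hxt) in Hw as [Hwx [->|Hw]]; simpl; rewrite ?in_app_iff; tauto.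
Qed.

Lemma solved_form_of_elim x t ls rs S : ~ In x (tvars t) ->
  solved_form_of (map (tsubst (bind x t)) ls) (map (tsubst (bind x t)) rs) S ->
  solved_form_of (Var x :: ls) (t :: rs) ((x, tsubst (bindings_subst S) t) :: S).
Proof.
  intros Hxt [[Hnd Hsol] [He Hr]].
  set (V := lvars (Var x :: ls) ++ lvars (t :: rs)).
  set (V' := lvars (map (tsubst (bind x t)) ls) ++ lvars (map (tsubst (bind x t)) rs)).
  assert (HV : forall w, In w V' -> w <> x /\ In w V) by (intros; apply in_lvars_bind; auto).
  assert (Hdom : forall y, In y (dom S) -> y <> x /\ In y V).
  { intros y Hy. apply in_map_iff in Hy as [[y' u] [<- Hin]]. apply HV, (proj1 (Hr _ _ Hin)). }
  assert (Hth : forall w, In w (tvars (tsubst (bindings_subst S) t)) ->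
                          ~ In w (dom S) /\ w <> x /\ In w V).
  { intros w Hw. apply in_tvars_tsubst in Hw as [v [Hv Hw]].
    assert (Hrange : forall y u, In (y, u) S -> incl (tvars u) V') by apply Hr.
    destruct (tvars_bindings_subst S V' v w (conj Hnd Hsol) Hrange Hw) as [Hwd [Hw'| ->]].
    - apply HV in Hw'. tauto.
    - split; [|split]; auto; [congruence|]. unfold V. simpl. rewrite !in_app_iff; auto. }
  split; [split|split].
  - constructor; auto. intros Hx. apply Hdom in Hx. tauto.
  - intros y u [Hyu|Hyu] z [<-|Hz] Hzu.
    + injection Hyu as <- <-. apply Hth in Hzu. tauto.
    + injection Hyu as <- <-. apply Hth in Hzu. tauto.
    + apply (Hr _ _ Hyu), HV in Hzu. tauto.
    + exact (Hsol y u Hyu z Hz Hzu).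
  - intros s. rewrite unifies_cons.
    assert (Hag : solves_bindings s S -> tsubst s (tsubst (bindings_subst S) t) = tsubst s t).
    { intros Hs. rewrite tsubst_comp. apply tsubst_ext. intros v _.
      apply solves_bindings_subst; auto. }
    split.
    + intros [Hx Hs]. assert (HsS : solves_bindings s S).
      { apply He, unifies_map_tsubst; auto using tsubst_bind. }
      intros y u [Hyu|Hyu]; auto. injection Hyu as <- <-. rewrite Hag; auto.
    + intros Hs. assert (HsS : solves_bindings s S) by (intros y u Hyu; apply Hs; simpl; auto).
      assert (Hx : s x = tsubst s t) by (rewrite <- Hag; auto; apply Hs; simpl; auto).
      split; auto. apply (unifies_map_tsubst s (bind x t)); auto using tsubst_bind. apply He; auto.
  - intros y u [Hyu|Hyu].
    + injection Hyu as <- <-. split; [unfold V; simpl; auto|]. intros w Hw. apply Hth; auto.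
    + destruct (Hr _ _ Hyu) as [Hy Hu]. split; [apply HV; auto|]. intros w Hw. apply HV, Hu; auto.
Qed.

Lemma solved_form_exists_elim n x t ls rs :
  (forall m, m < n -> forall ls' rs', nvars (lvars ls' ++ lvars rs') <= m ->
     unifiable ls' rs' -> exists S, solved_form_of ls' rs' S) ->
  nvars (lvars (Var x :: ls) ++ lvars (t :: rs)) <= n -> ~ In x (tvars t) ->
  unifiable (Var x :: ls) (t :: rs) -> exists S, solved_form_of (Var x :: ls) (t :: rs) S.
Proof.
  intros IHn Hn Hxt [s0 Hs0]. apply unifies_cons in Hs0 as [Hx Hs0].
  set (ls' := map (tsubst (bind x t)) ls). set (rs' := map (tsubst (bind x t)) rs).
  assert (Hlt : nvars (lvars ls' ++ lvars rs') < nvars (lvars (Var x :: ls) ++ lvars (t :: rs))).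
  { apply (nvars_incl_lt _ _ x).
    - intros w Hw. apply (in_lvars_bind x t ls rs w Hxt Hw).
    - simpl. auto.
    - intros Hw. apply (in_lvars_bind x t ls rs x Hxt Hw). reflexivity. }
  destruct (IHn _ (Nat.lt_le_trans _ _ _ Hlt Hn) ls' rs' (le_n _)) as [S HS].
  - exists s0. apply unifies_map_tsubst; auto using tsubst_bind.
  - eexists. apply solved_form_of_elim; eauto.
Qed.

Lemma solved_form_of_delete x ls rs S :
  solved_form_of ls rs S -> solved_form_of (Var x :: ls) (Var x :: rs) S.
Proof.
  apply solved_form_of_equiv.
  - intros s. rewrite unifies_cons. tauto.
  - intros w. simpl. rewrite !in_app_iff. simpl. tauto.
Qed.

Lemma solved_form_of_orient y t ls rs S :
  solved_form_of (Var y :: ls) (t :: rs) S -> solved_form_of (t :: ls) (Var y :: rs) S.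
Proof.
  apply solved_form_of_equiv.
  - intros s. rewrite !unifies_cons. intuition.
  - intros w. simpl. rewrite !in_app_iff. simpl. rewrite ?in_app_iff. tauto.
Qed.

Lemma lvars_decompose f g as_ bs ls rs :
  incl (lvars (as_ ++ ls) ++ lvars (bs ++ rs)) (lvars (Fn f as_ :: ls) ++ lvars (Fn g bs :: rs)).
Proof. intros w. rewrite !lvars_app. simpl. rewrite !in_app_iff. tauto. Qed.

Lemma solved_form_of_decompose f as_ bs ls rs S : length as_ = length bs ->
  solved_form_of (as_ ++ ls) (bs ++ rs) S -> solved_form_of (Fn f as_ :: ls) (Fn f bs :: rs) S.
Proof.
  intros Hl. apply solved_form_of_equiv.
  - intros s. rewrite unifies_cons, unifies_app by auto. simpl. split.
    + intros [Heq Hr]. injection Heq. auto.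
    + intros [Ha Hr]. split; auto. f_equal. exact Ha.
  - apply lvars_decompose.
Qed.

Lemma solved_form_exists n ls rs :
  nvars (lvars ls ++ lvars rs) <= n -> unifiable ls rs -> exists S, solved_form_of ls rs S.
Proof.
  revert ls rs. induction n as [n IHn] using (well_founded_induction lt_wf).
  intros ls rs. remember (lsize ls + lsize rs) as m eqn:Hm. revert ls rs Hm.
  induction m as [m IHm] using (well_founded_induction lt_wf).
  intros ls rs Hm Hn Hu. pose proof Hu as [s0 Hs0].
  destruct ls as [|a ls], rs as [|b rs]; try (apply unifies_length in Hs0; discriminate).
  { exists []. split; [split; [constructor|intros _ _ []]|split; [|intros _ _ []]].
    intros s. split; [intros _ _ _ []|reflexivity]. }
  assert (Hincl : forall ls' rs',
            incl (lvars ls' ++ lvars rs') (lvars (a :: ls) ++ lvars (b :: rs)) ->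
            nvars (lvars ls' ++ lvars rs') <= n)
    by (intros ls' rs' Hi; etransitivity; [apply nvars_incl, Hi|exact Hn]).
  apply unifies_cons in Hs0 as [Hab Hs0].
  destruct a as [x|f as_], b as [y|g bs].
  - destruct (Nat.eq_dec x y) as [<-|Hxy].
    + assert (Hlt : lsize ls + lsize rs < m) by (subst m; unfold lsize; simpl; lia).
      destruct (IHm _ Hlt ls rs eq_refl) as [S HS]; [|exists s0; auto|].
      * apply Hincl. intros w. simpl. rewrite !in_app_iff. simpl. tauto.
      * exists S. apply solved_form_of_delete, HS.
    + apply (solved_form_exists_elim n); auto. simpl. intuition congruence.
  - destruct (in_dec Nat.eq_dec x (tvars (Fn g bs))) as [Hin|Hnin];
      [exfalso; eapply occurs_check; eauto; discriminate|].
    apply (solved_form_exists_elim n); auto.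
  - destruct (in_dec Nat.eq_dec y (tvars (Fn f as_))) as [Hin|Hnin];
      [exfalso; eapply occurs_check; eauto; discriminate|].
    destruct (solved_form_exists_elim n y (Fn f as_) ls rs) as [S HS]; auto.
    + apply Hincl. intros w. simpl. rewrite !in_app_iff. simpl. rewrite ?in_app_iff. tauto.
    + exists s0. apply unifies_cons. auto.
    + exists S. apply solved_form_of_orient, HS.
  - injection Hab as <- Hargs.
    assert (Hl : length as_ = length bs) by (apply (unifies_length s0); exact Hargs).
    assert (Hlt : lsize (as_ ++ ls) + lsize (bs ++ rs) < m).
    { subst m. unfold lsize. rewrite !map_app, !list_sum_app. simpl. lia. }
    destruct (IHm _ Hlt (as_ ++ ls) (bs ++ rs) eq_refl) as [S HS].
    + apply Hincl, lvars_decompose.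
    + exists s0. apply unifies_app; auto.
    + exists S. apply solved_form_of_decompose; auto.
Qed.

Theorem mgu_exists ts ss : unifiable ts ss -> exists th, is_mgu th ts ss.
Proof.
  intros Hu. destruct (solved_form_exists _ ts ss (le_n _) Hu) as [S [[Hnd Hsol] [He Hr]]].
  set (th := bindings_subst S).
  assert (Hfix : forall x t, In (x, t) S -> tsubst th t = t).
  { intros x t Hxt. rewrite <- (tsubst_Var t) at 2. apply tsubst_ext. intros y Hy. unfold th.
    destruct (bindings_subst_cases S y) as [[-> _]|[u [Hu' _]]]; auto.
    exfalso. apply (Hsol x t Hxt y); auto. apply in_map_iff. exists (y, u); auto. }
  assert (Hth : solves_bindings th S).
  { intros x t Hxt. unfold th at 1. rewrite (bindings_subst_in S x t Hnd Hxt). symmetry; eauto. }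
  exists th. split; [|split; [|split]].
  - apply He, Hth.
  - intros sg Hsg. exists sg. intros x. symmetry. apply solves_bindings_subst; auto. apply He; auto.
  - intros x. unfold th. destruct (bindings_subst_cases S x) as [[Hx _]|[u [Hu' Hx]]];
      rewrite Hx; [simpl; rewrite Hx|apply (Hfix x)]; auto.
  - intros x Hx. unfold th in *.
    destruct (bindings_subst_cases S x) as [[Hx' _]|[u [Hu' Hx']]]; [congruence|].
    rewrite Hx'. destruct (Hr x u Hu') as [H1 H2]. auto.
Qed.

Definition most_general (a : subst) (L1 L2 : list term) : Prop :=
  unifies a L1 L2 /\ forall s, unifies s L1 L2 -> exists e, forall x, s x = tsubst e (a x).

Lemma mgu_most_general th L1 L2 : is_mgu th L1 L2 -> most_general th L1 L2.
Proof. intros [H1 [H2 _]]. split; auto. Qed.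

Lemma unifies_scomp s1 s2 L1 L2 :
  unifies (scomp s1 s2) L1 L2 <-> unifies s2 (map (tsubst s1) L1) (map (tsubst s1) L2).
Proof. unfold unifies. rewrite !map_tsubst_comp. tauto. Qed.

Lemma unifies_ext s s' L1 L2 : (forall x, s x = s' x) -> unifies s L1 L2 -> unifies s' L1 L2.
Proof. unfold unifies. intros Hs. rewrite <- !(map_tsubst_ext _ s s') by auto. auto. Qed.

Lemma most_general_scomp t1 t2 A1 B1 A2 B2 : most_general t1 A1 B1 ->
  most_general t2 (map (tsubst t1) A2) (map (tsubst t1) B2) ->
  most_general (scomp t1 t2) (A1 ++ A2) (B1 ++ B2).
Proof.
  intros [U1 M1] [U2 M2].
  assert (Hl : length A1 = length B1) by (eapply unifies_length; eauto).
  split.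
  - apply unifies_app; auto. split; apply unifies_scomp; auto.
    unfold unifies in *. rewrite U1. reflexivity.
  - intros s Hs. apply unifies_app in Hs as [Hs1 Hs2]; auto.
    destruct (M1 s Hs1) as [e1 He1].
    assert (Hu : unifies e1 (map (tsubst t1) A2) (map (tsubst t1) B2)).
    { apply unifies_scomp. apply (unifies_ext s); auto. }
    destruct (M2 e1 Hu) as [e2 He2]. exists e2. intros x. rewrite He1. unfold scomp.
    rewrite tsubst_comp. apply tsubst_ext. intros; apply He2.
Qed.

Lemma most_general_equiv a L1 L2 L1' L2' :
  (forall s, unifies s L1 L2 <-> unifies s L1' L2') ->
  most_general a L1 L2 -> most_general a L1' L2'.
Proof. intros H [H1 H2]. split; [apply H; auto|]. intros; apply H2, H; auto. Qed.

Lemma mgu_var_fixed th L1 L2 x : is_mgu th L1 L2 -> ~ In x (lvars L1 ++ lvars L2) -> th x = Var x.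
Proof.
  intros [_ [_ [_ Hrel]]] Hx. destruct (classic (th x = Var x)) as [|Hn]; auto.
  exfalso. apply Hx, Hrel, Hn.
Qed.

Lemma in_gvars_mgu th L1 L2 G y : is_mgu th L1 L2 -> In y (gvars (gsubst th G)) ->
  In y (gvars G) \/ In y (lvars L1 ++ lvars L2).
Proof.
  intros Hth Hy. apply in_gvars_gsubst in Hy as [x [Hx Hy]].
  destruct (classic (th x = Var x)) as [Hv|Hv].
  - rewrite Hv in Hy. destruct Hy as [<-|[]]. auto.
  - right. destruct Hth as [_ [_ [_ Hrel]]]. apply (Hrel x Hv); auto.
Qed.

Lemma not_in_gvars_mgu th L1 L2 G x : is_mgu th L1 L2 ->
  ~ In x (lvars L1 ++ lvars L2) -> ~ In x (gvars G) -> ~ In x (gvars (gsubst th G)).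
Proof. intros Hth H1 H2 Hx. destruct (in_gvars_mgu th L1 L2 G x Hth Hx); tauto. Qed.

Lemma gsubst_mgu_disjoint th L1 L2 G : is_mgu th L1 L2 ->
  (forall x, In x (gvars G) -> ~ In x (lvars L1 ++ lvars L2)) -> gsubst th G = G.
Proof. intros Hth HG. apply gsubst_id_on. intros; eapply mgu_var_fixed; eauto. Qed.

Lemma asubst_mgu_disjoint th L1 L2 a : is_mgu th L1 L2 ->
  (forall x, In x (avars a) -> ~ In x (lvars L1 ++ lvars L2)) -> asubst th a = a.
Proof.
  intros Hth Ha. assert (H : gsubst th [a] = [a]).
  { apply (gsubst_mgu_disjoint _ _ _ _ Hth). intros x Hx. apply Ha.
    unfold gvars in Hx. simpl in Hx. rewrite app_nil_r in Hx. exact Hx. }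
  injection H. auto.
Qed.

Lemma map_tsubst_mgu_disjoint th L1 L2 ts : is_mgu th L1 L2 ->
  (forall x, In x (lvars ts) -> ~ In x (lvars L1 ++ lvars L2)) -> map (tsubst th) ts = ts.
Proof. intros Hth Hts. apply map_tsubst_id_on. intros; eapply mgu_var_fixed; eauto. Qed.

Lemma mgu_variant th L1 L2 X e e' : is_mgu th L1 L2 ->
  left_inverse_on e' e (gvars X ++ lvars L1 ++ lvars L2) ->
  exists th' a b, is_mgu th' (map (tsubst e) L1) (map (tsubst e) L2) /\
    gsubst th' (gsubst e X) = gsubst a (gsubst th X) /\
    left_inverse_on b a (gvars (gsubst th X)).
Proof.
  intros Hth Hinv.
  assert (HL : forall L, incl (lvars L) (gvars X ++ lvars L1 ++ lvars L2) ->
                         map (tsubst e') (map (tsubst e) L) = L).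
  { intros L HL. rewrite map_tsubst_comp. apply map_tsubst_id_on. intros x Hx. apply Hinv, HL, Hx. }
  assert (HX : gsubst e' (gsubst e X) = X).
  { rewrite gsubst_comp. apply gsubst_id_on. intros x Hx. apply Hinv, in_or_app; auto. }
  destruct (mgu_exists (map (tsubst e) L1) (map (tsubst e) L2)) as [th' Hth'].
  { exists (scomp e' th). apply unifies_scomp. rewrite !HL; [apply Hth| |];
      intros x Hx; rewrite !in_app_iff; auto. }
  destruct Hth as [U [Mg _]]. pose proof Hth' as [U' [Mg' _]].
  destruct (Mg (scomp e th')) as [a Ha]; [apply unifies_scomp; auto|].
  destruct (Mg' (scomp e' th)) as [b Hb].
  { apply unifies_scomp. rewrite !HL; auto; intros x Hx; rewrite !in_app_iff; auto. }
  assert (E1 : gsubst th' (gsubst e X) = gsubst a (gsubst th X)).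
  { rewrite !gsubst_comp. apply gsubst_ext. intros x _. rewrite Ha. reflexivity. }
  exists th', a, b. split; [|split]; auto.
  assert (Hback : gsubst b (gsubst a (gsubst th X)) = gsubst th X).
  { rewrite <- E1. rewrite <- HX at 2. rewrite !gsubst_comp. apply gsubst_ext.
    intros y _. apply tsubst_ext. intros z _. symmetry. apply Hb. }
  rewrite gsubst_comp in Hback. intros x Hx. apply (gsubst_fixed _ _ Hback); auto.
Qed.

(** * Renaming apart *)

Lemma in_cvars_renaming C r f : (forall x, r x = Var (f x)) ->
  forall y, In y (cvars (csubst r C)) <-> exists u, In u (cvars C) /\ y = f u.
Proof.
  intros Hr y. unfold cvars, csubst; simpl. rewrite in_app_iff, in_lvars_subst, in_gvars_gsubst.
  split.
  - intros [[x [Hx Hy]]|[x [Hx Hy]]]; rewrite Hr in Hy; destruct Hy as [<-|[]];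
      exists x; rewrite in_app_iff; auto.
  - intros [u [Hu ->]]. apply in_app_or in Hu as [Hu|Hu]; [left|right];
      exists u; rewrite Hr; simpl; auto.
Qed.

Lemma in_cvars_hd C x : In x (lvars (hd_args C)) -> In x (cvars C).
Proof. intros; unfold cvars; apply in_app_iff; auto. Qed.

Lemma in_cvars_bd C x : In x (gvars (bd C)) -> In x (cvars C).
Proof. intros; unfold cvars; apply in_app_iff; auto. Qed.

(* [N] bounds the variables of [V] and [C]; the renaming swaps [0, N) with [N, 2N). *)
Lemma fresh_renaming C V : exists r, renaming r /\ disjoint (cvars (csubst r C)) V.
Proof.
  set (N := S (list_max (V ++ cvars C))).
  set (f := fun x => if x <? N then x + N else if x <? N + N then x - N else x).
  assert (Hbound : forall v, In v (V ++ cvars C) -> v < N).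
  { intros v Hv. pose proof (proj1 (list_max_le (V ++ cvars C) _) (le_n _)) as Hm.
    rewrite Forall_forall in Hm. specialize (Hm v Hv). unfold N. lia. }
  exists (fun x => Var (f x)). split.
  - exists f. split; [reflexivity|split].
    + unfold f. intros x y.
      destruct (Nat.ltb_spec x N), (Nat.ltb_spec y N), (Nat.ltb_spec x (N + N)),
        (Nat.ltb_spec y (N + N)); lia.
    + intros y. destruct (Nat.ltb_spec y N);
        [exists (y + N)|destruct (Nat.ltb_spec y (N + N)); [exists (y - N)|exists y]];
        unfold f; repeat match goal with |- context [?a <? ?b] => destruct (Nat.ltb_spec a b) end;
        lia.
  - intros y Hy HV. apply (in_cvars_renaming C _ f) in Hy as [u [Hu ->]]; auto.
    assert (u < N) by (apply Hbound, in_app_iff; auto).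
    assert (f u < N) by (apply Hbound, in_app_iff; auto).
    unfold f in *. destruct (Nat.ltb_spec u N); lia.
Qed.

Definition redirect (f g : nat -> nat) (D : list nat) (e : subst) : subst := fun x =>
  match find (fun u => Nat.eqb (f u) x) D with Some u => Var (g u) | None => e x end.

Lemma redirect_image f g D e u : (forall x y, f x = f y -> x = y) -> In u D ->
  redirect f g D e (f u) = Var (g u).
Proof.
  intros Hf Hu. unfold redirect. destruct (find _ D) as [v|] eqn:E.
  - apply find_some in E as [_ E]. apply Nat.eqb_eq, Hf in E. subst. reflexivity.
  - apply (find_none _ _ E) in Hu. rewrite Nat.eqb_refl in Hu. discriminate.
Qed.

Lemma redirect_outside f g D e x : (forall u, In u D -> f u <> x) -> redirect f g D e x = e x.
Proof.
  intros Hx. unfold redirect. destruct (find _ D) as [v|] eqn:E; auto.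
  apply find_some in E as [Hv E]. apply Nat.eqb_eq in E. exfalso. eapply Hx; eauto.
Qed.

Lemma renaming_switch C rho r' e e' V W : renaming rho -> renaming r' ->
  disjoint (cvars (csubst rho C)) V -> disjoint (cvars (csubst r' C)) W ->
  exists e1 e1', (forall x, In x V -> e1 x = e x) /\ (forall x, In x W -> e1' x = e' x) /\
    csubst e1 (csubst rho C) = csubst r' C /\ left_inverse_on e1' e1 (cvars (csubst rho C)).
Proof.
  intros [f [Hf [Hfi _]]] [f' [Hf' [Hfi' _]]] HV HW.
  exists (redirect f f' (cvars C) e), (redirect f' f (cvars C) e'). split; [|split; [|split]].
  - intros x Hx. apply redirect_outside. intros u Hu <-.
    apply (HV (f u)); auto. apply (in_cvars_renaming C rho f); eauto.
  - intros x Hx. apply redirect_outside. intros u Hu <-.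
    apply (HW (f' u)); auto. apply (in_cvars_renaming C r' f'); eauto.
  - assert (Hcomp : forall u, In u (cvars C) ->
              scomp rho (redirect f f' (cvars C) e) u = r' u).
    { intros u Hu. unfold scomp. rewrite Hf, Hf'. simpl. apply redirect_image; auto. }
    unfold csubst; simpl. f_equal.
    + rewrite map_tsubst_comp. apply map_tsubst_ext. intros; apply Hcomp, in_cvars_hd; auto.
    + rewrite gsubst_comp. apply gsubst_ext. intros; apply Hcomp, in_cvars_bd; auto.
  - intros x Hx. apply (in_cvars_renaming C rho f) in Hx as [u [Hu ->]]; auto.
    rewrite redirect_image by auto. simpl. apply redirect_image; auto.
Qed.

(** * Successful derivations *)

Inductive succeeds (P : program) : goal -> nat -> nat -> Prop :=
| succeeds_nil : succeeds P [] 0 0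
| succeeds_step G G' n k : step P G G' -> succeeds P G' n k ->
    succeeds P G (S n) (Nat.b2n (starts_nonbasic G) + k).

Lemma succeeds_of_derivation P G d :
  successful_derivation_of P G d -> succeeds P G (deriv_length d) (lambda d).
Proof.
  revert G. induction d as [|G0 rest IH]; intros G [[r Hr] [Hd Hl]]; [discriminate|].
  injection Hr as <- <-. destruct rest as [|G' rest].
  - simpl in Hl. subst. constructor.
  - assert (Hs : step P G0 G') by (apply (Hd 0); simpl; lia).
    assert (HS : succeeds P G' (deriv_length (G' :: rest)) (lambda (G' :: rest))).
    { apply IH. split; [eauto|split; auto]. intros i Hi. apply (Hd (S i)). simpl in *; lia. }
    replace (deriv_length (G0 :: G' :: rest)) with (S (deriv_length (G' :: rest)))
      by (unfold deriv_length; simpl; lia).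
    replace (lambda (G0 :: G' :: rest)) with
      (Nat.b2n (starts_nonbasic G0) + lambda (G' :: rest))
      by (unfold lambda; simpl; destruct (starts_nonbasic G0); reflexivity).
    econstructor; eauto.
Qed.

Lemma derivation_of_succeeds P G n k : succeeds P G n k ->
  exists d, successful_derivation_of P G d /\ deriv_length d = n /\ lambda d = k.
Proof.
  induction 1 as [|G G' n k Hs _ [d [[[rest ->] [Hd Hl]] [Hn Hk]]]].
  - exists [[]]. repeat split; eauto. intros i Hi. simpl in Hi. lia.
  - exists (G :: G' :: rest). split; [split; [eauto|split]|split].
    + intros [|i] Hi; simpl; auto. apply Hd. simpl in *. lia.
    + simpl in *. destruct rest; auto.
    + unfold deriv_length in *. simpl in *. lia.
    + unfold lambda in *. simpl. destruct (starts_nonbasic G); simpl; subst; auto.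
Qed.

Lemma steps_nil_iff_succeeds P G : steps P G [] <-> exists n k, succeeds P G n k.
Proof.
  split.
  - intros H. apply clos_rt_rt1n in H. remember [] as E eqn:HE.
    induction H as [|G G' G'' Hs _ IH]; subst; [exists 0, 0; constructor|].
    destruct IH as [n [k HS]]; auto. eexists; eexists; econstructor; eauto.
  - intros [n [k H]]. induction H; [apply rt_refl|].
    eapply rt_trans; [apply rt_step|]; eauto.
Qed.

Lemma min_of_ext Q Q' : (forall n, Q n <-> Q' n) -> min_of Q = min_of Q'.
Proof.
  intros HQ. unfold min_of.
  destruct (excluded_middle_informative (exists n, Q n /\ forall m, Q m -> n <= m)) as [H1|H1],
    (excluded_middle_informative (exists n, Q' n /\ forall m, Q' m -> n <= m)) as [H2|H2].
  - destruct (constructive_indefinite_description _ H1) as [a [Ha1 Ha2]],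
      (constructive_indefinite_description _ H2) as [b [Hb1 Hb2]]. simpl. f_equal.
    apply Nat.le_antisymm; [apply Ha2, HQ|apply Hb2, HQ]; auto.
  - exfalso. apply H2. destruct H1 as [a [Ha1 Ha2]].
    exists a. split; [apply HQ; auto|intros; apply Ha2, HQ; auto].
  - exfalso. apply H1. destruct H2 as [a [Ha1 Ha2]].
    exists a. split; [apply HQ; auto|intros; apply Ha2, HQ; auto].
  - reflexivity.
Qed.

Lemma mu_succeeds P G : mu P G = min_of (fun k => exists n, succeeds P G n k).
Proof.
  apply min_of_ext. intros k. split.
  - intros [d [Hd <-]]. eexists. apply succeeds_of_derivation; eauto.
  - intros [n HS]. apply derivation_of_succeeds in HS as [d [Hd [_ Hk]]]. eauto.
Qed.

Lemma nu_succeeds P G : nu P G = min_of (fun n => exists k, succeeds P G n k).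
Proof.
  apply min_of_ext. intros n. split.
  - intros [d [Hd <-]]. eexists. apply succeeds_of_derivation; eauto.
  - intros [k HS]. apply derivation_of_succeeds in HS as [d [Hd [Hn _]]]. eauto.
Qed.

Definition resolves_with (P : program) (p : nat) (ts : list term) (G : goal) (C : clause)
  (r th : subst) : Prop :=
  P C /\ renaming r /\ disjoint (cvars (csubst r C)) (gvars (APred p ts :: G)) /\
  hd_pred C = p /\ is_mgu th ts (hd_args (csubst r C)).

Lemma succeeds_eq_iff P u1 u2 X n k : succeeds P (AEq u1 u2 :: X) n k <->
  exists n' th, n = S n' /\ is_mgu th [u1] [u2] /\ succeeds P (gsubst th X) n' k.
Proof.
  split.
  - intros H. inversion H as [|? ? ? ? Hs]; subst. inversion Hs; subst. eauto.
  - intros [n' [th [-> [Hth HS]]]]. apply (succeeds_step P _ _ _ _ (step_eq P _ _ _ _ Hth) HS).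
Qed.

Lemma succeeds_neq_iff P u1 u2 X n k : succeeds P (ANeq u1 u2 :: X) n k <->
  exists n', n = S n' /\ ~ unifiable [u1] [u2] /\ succeeds P X n' k.
Proof.
  split.
  - intros H. inversion H as [|? ? ? ? Hs]; subst. inversion Hs; subst. eauto.
  - intros [n' [-> [Hu HS]]]. apply (succeeds_step P _ _ _ _ (step_neq P _ _ _ Hu) HS).
Qed.

(* [F ++ APred p ts :: H] succeeds when the atom is resolved first, out of the leftmost
   selection order. *)
Definition succeeds_resolving_first (P : program) (p : nat) (ts : list term) (F H : goal)
  (n k : nat) : Prop :=
  exists n' k' C r th, n = S n' /\ k = S k' /\ resolves_with P p ts (F ++ H) C r th /\
    succeeds P (gsubst th (F ++ bd (csubst r C) ++ H)) n' k'.

Lemma succeeds_res_iff P p ts X n k :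
  succeeds P (APred p ts :: X) n k <-> succeeds_resolving_first P p ts [] X n k.
Proof.
  split.
  - intros H. inversion H as [|? ? ? ? Hs]; subst. inversion Hs; subst.
    exists n0, k0, C, rho, th. unfold resolves_with. tauto.
  - intros [n' [k' [C [r [th [-> [-> [[HC [Hr [Hd [<- Hth]]]] HS]]]]]]]].
    apply (succeeds_step P _ _ _ _ (step_res P _ _ _ _ _ _ HC Hr Hd eq_refl Hth) HS).
Qed.

(** * Variants *)

Lemma resolvent_variant C rho r' th p ts F H e e' :
  renaming rho -> renaming r' ->
  disjoint (cvars (csubst rho C)) (gvars (APred p ts :: F ++ H)) ->
  disjoint (cvars (csubst r' C)) (gvars (gsubst e (APred p ts :: F ++ H))) ->
  is_mgu th ts (hd_args (csubst rho C)) ->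
  left_inverse_on e' e (gvars (APred p ts :: F ++ H)) ->
  exists th' a b, is_mgu th' (map (tsubst e) ts) (hd_args (csubst r' C)) /\
    gsubst th' (gsubst e F ++ bd (csubst r' C) ++ gsubst e H) =
      gsubst a (gsubst th (F ++ bd (csubst rho C) ++ H)) /\
    left_inverse_on b a (gvars (gsubst th (F ++ bd (csubst rho C) ++ H))).
Proof.
  intros Hrho Hr' Hd Hd' Hth Hinv. set (V := gvars (APred p ts :: F ++ H)) in *.
  destruct (renaming_switch C rho r' e e' V (gvars (gsubst e (APred p ts :: F ++ H))))
    as [e1 [e1' [He1 [He1' [Hcl Hinv1]]]]]; auto.
  set (X := F ++ bd (csubst rho C) ++ H).
  assert (HV : forall x, In x (gvars X ++ lvars ts ++ lvars (hd_args (csubst rho C))) ->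
                         In x V \/ In x (cvars (csubst rho C))).
  { intros x Hx. unfold X, V in *. rewrite !in_app_iff, !in_gvars_app in Hx.
    rewrite in_gvars_cons, in_gvars_app. simpl.
    destruct Hx as [[Hx|[Hx|Hx]]|[Hx|Hx]]; auto using in_cvars_bd, in_cvars_hd. }
  assert (Hinv2 : left_inverse_on e1' e1 (gvars X ++ lvars ts ++ lvars (hd_args (csubst rho C)))).
  { intros x Hx. destruct (HV x Hx) as [HxV|HxC]; [|apply Hinv1; auto].
    rewrite He1 by auto. rewrite <- (Hinv x HxV). apply tsubst_ext.
    intros y Hy. apply He1', in_gvars_gsubst. eauto. }
  destruct (mgu_variant th ts _ X e1 e1' Hth Hinv2) as [th' [a [b [Hth' [Heq Hb]]]]].
  assert (Hts : map (tsubst e1) ts = map (tsubst e) ts).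
  { apply map_tsubst_ext. intros x Hx. apply He1. unfold V. rewrite in_gvars_cons. auto. }
  assert (HF : forall G, incl (gvars G) V -> gsubst e1 G = gsubst e G).
  { intros G HG. apply gsubst_ext. intros x Hx. apply He1, HG, Hx. }
  assert (HX : gsubst e1 X = gsubst e F ++ bd (csubst r' C) ++ gsubst e H).
  { unfold X. rewrite !gsubst_app, (HF F), (HF H), <- Hcl; auto;
      intros x Hx; unfold V; rewrite in_gvars_cons, in_gvars_app; auto. }
  replace (map (tsubst e1) (hd_args (csubst rho C))) with (hd_args (csubst r' C)) in Hth'
    by (rewrite <- Hcl; reflexivity).
  rewrite Hts in Hth'. rewrite HX in Heq. exists th', a, b. auto.
Qed.

Lemma step_variant P G G' e e' : step P G G' -> left_inverse_on e' e (gvars G) ->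
  exists a b, step P (gsubst e G) (gsubst a G') /\ left_inverse_on b a (gvars G').
Proof.
  intros Hs Hinv. destruct Hs as [t1 t2 G th Hth|t1 t2 G Hn|p ts G C rho th HC Hrho Hd <- Hth].
  - destruct (mgu_variant th [t1] [t2] G e e' Hth) as [th' [a [b [Hth' [Heq Hb]]]]].
    { intros x Hx. apply Hinv. unfold gvars, lvars in *. simpl in *.
      rewrite !app_nil_r, !in_app_iff in *. tauto. }
    exists a, b. split; auto. rewrite <- Heq. apply step_eq, Hth'.
  - exists e, e'. split.
    + apply step_neq. intros [s Hs]. apply Hn.
      exists (scomp e s). apply unifies_scomp, Hs.
    + intros x Hx. apply Hinv, in_gvars_cons. auto.
  - destruct (fresh_renaming C (gvars (gsubst e (APred (hd_pred C) ts :: G)))) as [r' [Hr' Hd']].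
    destruct (resolvent_variant C rho r' th (hd_pred C) ts [] G e e')
      as [th' [a [b [Hth' [Heq Hb]]]]]; auto.
    change (gsubst e []) with (@nil atom) in Heq. rewrite !app_nil_l in Heq.
    exists a, b. split; auto. rewrite <- Heq. apply step_res; auto.
Qed.

Lemma succeeds_variant P G n k e e' : succeeds P G n k -> left_inverse_on e' e (gvars G) ->
  succeeds P (gsubst e G) n k.
Proof.
  intros HS. revert e e'. induction HS as [|G G' n k Hs _ IH]; intros e e' Hinv; [constructor|].
  destruct (step_variant P G G' e e' Hs Hinv) as [a [b [Hs' Hb]]].
  replace (starts_nonbasic G) with (starts_nonbasic (gsubst e G))
    by (destruct G as [|[] ?]; reflexivity).
  econstructor; eauto.
Qed.

Lemma succeeds_most_general P a b L1 L2 Y n k : most_general a L1 L2 -> most_general b L1 L2 ->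
  succeeds P (gsubst a Y) n k -> succeeds P (gsubst b Y) n k.
Proof.
  intros [Ua Ma] [Ub Mb] HS. destruct (Ma b Ub) as [g1 Hg1], (Mb a Ua) as [g2 Hg2].
  assert (E1 : gsubst b Y = gsubst g1 (gsubst a Y)).
  { rewrite gsubst_comp. apply gsubst_ext. intros; apply Hg1. }
  assert (E2 : gsubst g2 (gsubst g1 (gsubst a Y)) = gsubst a Y).
  { rewrite <- E1, gsubst_comp. apply gsubst_ext. intros; symmetry; apply Hg2. }
  rewrite E1. apply succeeds_variant with g2; auto.
  rewrite gsubst_comp in E2. intros x Hx. apply (gsubst_fixed _ _ E2); auto.
Qed.

(* Both composites are most general unifiers of the joint problem, hence give variants. *)
Lemma succeeds_mgu_commute P L1 L2 M1 M2 s th Y n k :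
  is_mgu s L1 L2 -> is_mgu th (map (tsubst s) M1) (map (tsubst s) M2) ->
  succeeds P (gsubst th (gsubst s Y)) n k ->
  exists th0 s2, is_mgu th0 M1 M2 /\ is_mgu s2 (map (tsubst th0) L1) (map (tsubst th0) L2) /\
    succeeds P (gsubst s2 (gsubst th0 Y)) n k.
Proof.
  intros Hs Hth HS.
  assert (Hl : length L1 = length L2) by (destruct Hs as [U _]; eapply unifies_length; eauto).
  assert (M12 : most_general (scomp s th) (L1 ++ M1) (L2 ++ M2))
    by (apply most_general_scomp; apply mgu_most_general; auto).
  pose proof (proj1 M12) as U12. apply unifies_app in U12 as [UL UM]; auto.
  destruct (mgu_exists M1 M2) as [th0 Hth0]; [exists (scomp s th); auto|].
  destruct (proj2 (mgu_most_general _ _ _ Hth0) _ UM) as [e He].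
  destruct (mgu_exists (map (tsubst th0) L1) (map (tsubst th0) L2)) as [s2 Hs2].
  { exists e. apply unifies_scomp. apply (unifies_ext (scomp s th)); auto. }
  assert (M21 : most_general (scomp th0 s2) (L1 ++ M1) (L2 ++ M2)).
  { apply most_general_equiv with (M1 ++ L1) (M2 ++ L2).
    - intros sg. assert (length M1 = length M2)
        by (destruct Hth0 as [U _]; eapply unifies_length; eauto).
      rewrite !unifies_app by auto. tauto.
    - apply most_general_scomp; apply mgu_most_general; auto. }
  exists th0, s2. split; [|split]; auto.
  rewrite gsubst_comp. rewrite gsubst_comp in HS.
  apply (succeeds_most_general P (scomp s th) _ (L1 ++ M1) (L2 ++ M2)); auto.
Qed.

Lemma succeeds_resolvent_renaming C r r' th p ts F H n k P :
  renaming r -> renaming r' ->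
  disjoint (cvars (csubst r C)) (gvars (APred p ts :: F ++ H)) ->
  disjoint (cvars (csubst r' C)) (gvars (APred p ts :: F ++ H)) ->
  is_mgu th ts (hd_args (csubst r C)) -> succeeds P (gsubst th (F ++ bd (csubst r C) ++ H)) n k ->
  exists th', is_mgu th' ts (hd_args (csubst r' C)) /\
    succeeds P (gsubst th' (F ++ bd (csubst r' C) ++ H)) n k.
Proof.
  intros Hr Hr' Hd Hd' Hth HS.
  destruct (resolvent_variant C r r' th p ts F H Var Var) as [th' [a [b [Hth' [Heq Hb]]]]];
    rewrite ?gsubst_Var; auto.
  { intros x _. reflexivity. }
  rewrite map_tsubst_id_on, !gsubst_Var in * by reflexivity.
  exists th'. split; auto. rewrite Heq. eapply succeeds_variant; eauto.
Qed.

(** * Moving an atom in front of equations *)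

Definition all_eqs (E : goal) : Prop := forall a, In a E -> exists t1 t2, a = AEq t1 t2.

Lemma all_eqs_gsubst s E : all_eqs E -> all_eqs (gsubst s E).
Proof.
  intros HE a Ha. apply in_map_iff in Ha as [b [<- Hb]].
  destruct (HE b Hb) as [t1 [t2 ->]]. simpl. eauto.
Qed.

Lemma all_eqs_ind (Q : goal -> Prop) : Q [] ->
  (forall u1 u2 E, (forall s, Q (gsubst s E)) -> Q (AEq u1 u2 :: E)) ->
  forall E, all_eqs E -> Q E.
Proof.
  intros Hnil Hcons E. remember (length E) as m eqn:Hm. revert E Hm.
  induction m as [|m IH]; intros [|a E] Hm HE; try discriminate; auto.
  destruct (HE a (or_introl eq_refl)) as [u1 [u2 ->]].
  assert (HE' : all_eqs E) by (intros b Hb; apply HE; right; auto).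
  apply Hcons; auto. intros s. apply IH; [|apply all_eqs_gsubst; auto].
  unfold gsubst. rewrite length_map. injection Hm. auto.
Qed.

Lemma succeeds_eq_cong P u1 u2 A B n k :
  (forall s n', n = S n' -> is_mgu s [u1] [u2] ->
     succeeds P (gsubst s A) n' k <-> succeeds P (gsubst s B) n' k) ->
  succeeds P (AEq u1 u2 :: A) n k <-> succeeds P (AEq u1 u2 :: B) n k.
Proof.
  intros HAB. rewrite !succeeds_eq_iff.
  split; intros [n' [th [-> [Hth HS]]]]; exists n', th;
    (split; [reflexivity|split; [exact Hth|apply HAB; auto]]).
Qed.

Lemma succeeds_eq_comm P u1 u2 v1 v2 X n k :
  succeeds P (AEq u1 u2 :: AEq v1 v2 :: X) n k -> succeeds P (AEq v1 v2 :: AEq u1 u2 :: X) n k.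
Proof.
  rewrite succeeds_eq_iff. intros [n1 [s [-> [Hs HS]]]].
  apply succeeds_eq_iff in HS as [n2 [th [-> [Hth HS]]]].
  destruct (succeeds_mgu_commute P [u1] [u2] [v1] [v2] s th X n2 k Hs Hth HS)
    as [th0 [s2 [Hth0 [Hs2 HS2]]]].
  apply succeeds_eq_iff. exists (S n2), th0. split; [reflexivity|split; [exact Hth0|]].
  apply succeeds_eq_iff. exists n2, s2. auto.
Qed.

Lemma succeeds_eqs_eq P E u1 u2 H n k : all_eqs E ->
  succeeds P (E ++ AEq u1 u2 :: H) n k <-> succeeds P (AEq u1 u2 :: E ++ H) n k.
Proof.
  intros HE. revert u1 u2 H n k. pattern E. apply all_eqs_ind; [reflexivity| |exact HE].
  clear E HE. intros v1 v2 E IH.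
  intros u1 u2 H n k. simpl.
  transitivity (succeeds P (AEq v1 v2 :: AEq u1 u2 :: E ++ H) n k);
    [|split; apply succeeds_eq_comm].
  apply succeeds_eq_cong. intros s n' _ _.
  specialize (IH s (tsubst s u1) (tsubst s u2) (gsubst s H) n' k).
  rewrite gsubst_cons, !gsubst_app, gsubst_cons. exact IH.
Qed.

Lemma succeeds_eq_neq_comm P v1 v2 t1 t2 X n k :
  (forall x, In x (tvars t1 ++ tvars t2) -> ~ In x (tvars v1 ++ tvars v2)) ->
  succeeds P (AEq v1 v2 :: ANeq t1 t2 :: X) n k <-> succeeds P (ANeq t1 t2 :: AEq v1 v2 :: X) n k.
Proof.
  intros Hfresh.
  assert (Hfix : forall s, is_mgu s [v1] [v2] -> asubst s (ANeq t1 t2) = ANeq t1 t2).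
  { intros s Hs. apply (asubst_mgu_disjoint _ _ _ _ Hs). rewrite !lvars_singleton. exact Hfresh. }
  rewrite succeeds_eq_iff, succeeds_neq_iff. split.
  - intros [n' [s [-> [Hs HS]]]]. rewrite gsubst_cons, Hfix in HS by auto.
    apply succeeds_neq_iff in HS as [n'' [-> [Hu HS]]].
    exists (S n''). split; [reflexivity|split; [exact Hu|]]. apply succeeds_eq_iff. eauto.
  - intros [n' [-> [Hu HS]]]. apply succeeds_eq_iff in HS as [n'' [s [-> [Hs HS]]]].
    exists (S n''), s. split; [reflexivity|split; [exact Hs|]]. rewrite gsubst_cons, Hfix by auto.
    apply succeeds_neq_iff. eauto.
Qed.

Lemma succeeds_eqs_neq P E t1 t2 H n k : all_eqs E ->
  (forall x, In x (tvars t1 ++ tvars t2) -> ~ In x (gvars E)) ->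
  succeeds P (E ++ ANeq t1 t2 :: H) n k <-> succeeds P (ANeq t1 t2 :: E ++ H) n k.
Proof.
  intros HE. revert t1 t2 H n k. pattern E. apply all_eqs_ind; [reflexivity| |exact HE].
  clear E HE. intros v1 v2 E IH.
  intros t1 t2 H n k Hfresh.
  assert (Hv : forall x, In x (tvars t1 ++ tvars t2) -> ~ In x (tvars v1 ++ tvars v2)).
  { intros x Hx Hin. apply (Hfresh x Hx), in_gvars_cons. auto. }
  simpl. rewrite <- succeeds_eq_neq_comm by auto.
  apply succeeds_eq_cong. intros s n' _ Hs.
  assert (Hv' : forall x, In x (tvars t1 ++ tvars t2) -> ~ In x (lvars [v1] ++ lvars [v2]))
    by (rewrite !lvars_singleton; auto).
  rewrite gsubst_cons, !gsubst_app, gsubst_cons, (asubst_mgu_disjoint _ _ _ _ Hs) by exact Hv'.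
  apply IH.
  intros x Hx. apply (not_in_gvars_mgu _ _ _ _ _ Hs); auto.
  intros Hin. apply (Hfresh x Hx), in_gvars_cons. auto.
Qed.

Lemma renamed_clause_mgu_fresh s u1 u2 p ts G r C : is_mgu s [u1] [u2] ->
  disjoint (cvars (csubst r C)) (gvars (APred p ts :: AEq u1 u2 :: G)) ->
  disjoint (cvars (csubst r C)) (gvars (APred p (map (tsubst s) ts) :: gsubst s G)) /\
  gsubst s (bd (csubst r C)) = bd (csubst r C) /\
  map (tsubst s) (hd_args (csubst r C)) = hd_args (csubst r C).
Proof.
  intros Hs Hd.
  assert (Hn : forall x, In x (cvars (csubst r C)) -> ~ In x (lvars [u1] ++ lvars [u2])).
  { intros x Hx Hin. apply (Hd x Hx). rewrite !in_gvars_cons. right; left.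
    rewrite !lvars_singleton in Hin. exact Hin. }
  split; [|split].
  - intros x Hx Hin. change (APred p (map (tsubst s) ts) :: gsubst s G)
      with (gsubst s (APred p ts :: G)) in Hin.
    apply (in_gvars_mgu _ _ _ _ _ Hs) in Hin as [Hin|Hin]; [|exact (Hn x Hx Hin)].
    apply (Hd x Hx). rewrite !in_gvars_cons in *. tauto.
  - apply (gsubst_mgu_disjoint _ _ _ _ Hs). intros; apply Hn, in_cvars_bd; auto.
  - apply (map_tsubst_mgu_disjoint _ _ _ _ Hs). intros; apply Hn, in_cvars_hd; auto.
Qed.

Lemma resolving_first_eq_intro P p ts u1 u2 E K n k s : is_mgu s [u1] [u2] ->
  succeeds_resolving_first P p (map (tsubst s) ts) (gsubst s E) (gsubst s K) n k ->
  succeeds_resolving_first P p ts (AEq u1 u2 :: E) K (S n) k.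
Proof.
  intros Hs [n' [k' [C [r1 [th1 [-> [-> [[HC [Hr1 [Hd1 [Hp Hth1]]]] HS]]]]]]]].
  destruct (fresh_renaming C (gvars (APred p ts :: AEq u1 u2 :: E ++ K))) as [r [Hr Hd]].
  destruct (renamed_clause_mgu_fresh s u1 u2 p ts (E ++ K) r C Hs Hd) as [Hd2 [Hb Hh]].
  rewrite gsubst_app in Hd2.
  destruct (succeeds_resolvent_renaming C r1 r th1 p (map (tsubst s) ts) (gsubst s E)
              (gsubst s K) n' k' P Hr1 Hr Hd1 Hd2 Hth1 HS) as [th2 [Hth2 HS2]].
  set (Y := E ++ bd (csubst r C) ++ K).
  assert (HY : succeeds P (gsubst th2 (gsubst s Y)) n' k')
    by (unfold Y; rewrite (gsubst_app s), (gsubst_app s), Hb; exact HS2).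
  rewrite <- Hh in Hth2.
  destruct (succeeds_mgu_commute P [u1] [u2] ts (hd_args (csubst r C)) s th2 Y n' k' Hs Hth2 HY)
    as [th0 [s2 [Hth0 [Hs2 HS0]]]].
  exists (S n'), k', C, r, th0. split; [reflexivity|split; [reflexivity|split]].
  - exact (conj HC (conj Hr (conj Hd (conj Hp Hth0)))).
  - apply succeeds_eq_iff. exists n', s2. auto.
Qed.

Lemma resolving_first_eq_elim P p ts u1 u2 E K n k :
  succeeds_resolving_first P p ts (AEq u1 u2 :: E) K n k ->
  exists n' s, n = S n' /\ is_mgu s [u1] [u2] /\
    succeeds_resolving_first P p (map (tsubst s) ts) (gsubst s E) (gsubst s K) n' k.
Proof.
  intros [n0 [k' [C [r [th0 [-> [-> [[HC [Hr [Hd [Hp Hth0]]]] HS]]]]]]]].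
  apply succeeds_eq_iff in HS as [n' [s2 [-> [Hs2 HS]]]].
  set (Y := E ++ bd (csubst r C) ++ K) in HS.
  destruct (succeeds_mgu_commute P ts (hd_args (csubst r C)) [u1] [u2] th0 s2 Y n' k' Hth0 Hs2 HS)
    as [s [th2 [Hs [Hth2 HS2]]]].
  destruct (renamed_clause_mgu_fresh s u1 u2 p ts (E ++ K) r C Hs Hd) as [Hd2 [Hb Hh]].
  rewrite Hh in Hth2. rewrite gsubst_app in Hd2.
  exists (S n'), s. split; [reflexivity|split; [exact Hs|]].
  exists n', k', C, r, th2. split; [reflexivity|split; [reflexivity|split]].
  - exact (conj HC (conj Hr (conj Hd2 (conj Hp Hth2)))).
  - unfold Y in HS2. rewrite (gsubst_app s), (gsubst_app s), Hb in HS2. exact HS2.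
Qed.

Lemma succeeds_eqs_res P E p ts K n k : all_eqs E ->
  succeeds P (E ++ APred p ts :: K) n k <-> succeeds_resolving_first P p ts E K n k.
Proof.
  intros HE. revert p ts K n k. pattern E. apply all_eqs_ind; [apply succeeds_res_iff| |exact HE].
  clear E HE. intros u1 u2 E IH p ts K n k. simpl. rewrite succeeds_eq_iff. split.
  - intros [n' [s [-> [Hs HS]]]]. rewrite gsubst_app in HS.
    apply (resolving_first_eq_intro P p ts u1 u2 E K n' k s Hs), IH, HS.
  - intros HR. apply resolving_first_eq_elim in HR as [n' [s [-> [Hs HR]]]].
    exists n', s. split; [reflexivity|split; [exact Hs|]].
    rewrite gsubst_app. apply IH, HR.
Qed.

(** * Private disequations *)

Definition private_diseqs (G R : goal) : Prop :=
  forall A B t1 t2, G = A ++ ANeq t1 t2 :: B ->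
  forall x, In x (tvars t1 ++ tvars t2) -> ~ In x (gvars (A ++ B ++ R)).

Definition no_diseqs (G : goal) : Prop := forall t1 t2, ~ In (ANeq t1 t2) G.

Lemma no_diseqs_gsubst s G : no_diseqs G -> no_diseqs (gsubst s G).
Proof.
  intros HG t1 t2 Hin. apply in_map_iff in Hin as [[] [Hb Hin]]; try discriminate.
  eapply HG; eauto.
Qed.

Lemma private_diseqs_of_no_diseqs G R : no_diseqs G -> private_diseqs G R.
Proof. intros HG A B t1 t2 -> . exfalso. apply (HG t1 t2), in_or_app. simpl. auto. Qed.

Lemma private_diseqs_tail a G R : private_diseqs (a :: G) R -> private_diseqs G R.
Proof.
  intros HP A B t1 t2 -> x Hx Hin. apply (HP (a :: A) B t1 t2 eq_refl x Hx).
  change (In x (gvars (a :: A ++ B ++ R))). rewrite in_gvars_cons. auto.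
Qed.

Lemma private_diseqs_head t1 t2 G E R : private_diseqs (ANeq t1 t2 :: G) (E ++ R) ->
  forall x, In x (tvars t1 ++ tvars t2) -> ~ In x (gvars E).
Proof.
  intros HP x Hx Hin. apply (HP [] G t1 t2 eq_refl x Hx). simpl. rewrite !in_gvars_app. auto.
Qed.

Lemma gsubst_eq_app_neq s G A' B' t1' t2' : gsubst s G = A' ++ ANeq t1' t2' :: B' ->
  exists A B t1 t2, G = A ++ ANeq t1 t2 :: B /\ gsubst s A = A' /\ gsubst s B = B' /\
    tsubst s t1 = t1' /\ tsubst s t2 = t2'.
Proof.
  intros H. apply map_eq_app in H as [A [L [-> [HA HL]]]].
  apply map_eq_cons in HL as [[] [B [-> [Hd HB]]]]; try discriminate.
  injection Hd as H1 H2. exists A, B, t1, t2. auto.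
Qed.

Lemma private_diseqs_mgu th L1 L2 G R : is_mgu th L1 L2 ->
  (forall A B t1 t2, G = A ++ ANeq t1 t2 :: B -> forall y, In y (tvars t1 ++ tvars t2) ->
     (forall x, ~ In x (tvars (th y))) \/
     (~ In y (lvars L1 ++ lvars L2) /\ ~ In y (gvars (A ++ B ++ R)))) ->
  private_diseqs (gsubst th G) (gsubst th R).
Proof.
  intros Hth Hvars A' B' t1' t2' Heq x Hx.
  apply gsubst_eq_app_neq in Heq as [A [B [t1 [t2 [-> [<- [<- [<- <-]]]]]]]].
  assert (Hy : exists y, In y (tvars t1 ++ tvars t2) /\ In x (tvars (th y))).
  { apply in_app_or in Hx as [Hx|Hx]; apply in_tvars_tsubst in Hx as [y [Hy Hx]];
      exists y; rewrite in_app_iff; auto. }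
  destruct Hy as [y [Hy Hxy]].
  destruct (Hvars A B t1 t2 eq_refl y Hy) as [Hground|[HyL HyR]]; [exfalso; eapply Hground; eauto|].
  rewrite (mgu_var_fixed _ _ _ _ Hth HyL) in Hxy. destruct Hxy as [<-|[]].
  rewrite <- !gsubst_app. apply (not_in_gvars_mgu _ _ _ _ _ Hth); auto.
Qed.

Lemma private_diseqs_eq u1 u2 G R th : private_diseqs (AEq u1 u2 :: G) R ->
  is_mgu th [u1] [u2] -> private_diseqs (gsubst th G) (gsubst th R).
Proof.
  intros HP Hth. apply (private_diseqs_mgu _ _ _ _ _ Hth).
  intros A B t1 t2 HG y Hy. right.
  pose proof (HP (AEq u1 u2 :: A) B t1 t2 ltac:(rewrite HG; reflexivity) y Hy) as Hn.
  change (~ In y (gvars (AEq u1 u2 :: A ++ B ++ R))) in Hn.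
  rewrite in_gvars_cons in Hn. rewrite !lvars_singleton. simpl in Hn. tauto.
Qed.

Lemma input_args_map g ms l : input_args ms (map g l) = map g (input_args ms l).
Proof.
  unfold input_args. revert l. induction ms as [|[] ms IH]; intros [|t l]; simpl; f_equal; auto.
Qed.

Lemma mgu_grounds_input_vars M p ts hs ms th u :
  atom_satisfies M (APred p ts) -> M p = Some ms -> unifies th ts hs ->
  In u (input_vars ms hs) -> forall x, ~ In x (tvars (th u)).
Proof.
  intros [ms' [Hms' [_ Hg]]] Hms Hu Hin x Hx. rewrite Hms in Hms'. injection Hms' as <-.
  assert (Hx' : In x (lvars (map (tsubst th) (input_args ms hs))))
    by (apply in_lvars_subst; eauto).
  rewrite <- input_args_map, <- Hu, input_args_map in Hx'.
  apply in_lvars_subst in Hx' as [z [Hz _]]. unfold input_vars in Hg. rewrite Hg in Hz. exact Hz.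
Qed.

Lemma in_lvars_renamed r f ts u : (forall x, r x = Var (f x)) ->
  (forall x y, f x = f y -> x = y) -> In (f u) (lvars (map (tsubst r) ts)) -> In u (lvars ts).
Proof.
  intros Hr Hf Hu. apply in_lvars_subst in Hu as [x [Hx Hu]]. rewrite Hr in Hu.
  destruct Hu as [Hu|[]]. apply Hf in Hu. subst. exact Hx.
Qed.

Lemma in_gvars_renamed r f G u : (forall x, r x = Var (f x)) ->
  (forall x y, f x = f y -> x = y) -> In (f u) (gvars (gsubst r G)) -> In u (gvars G).
Proof.
  intros Hr Hf Hu. apply in_gvars_gsubst in Hu as [x [Hx Hu]]. rewrite Hr in Hu.
  destruct Hu as [Hu|[]]. apply Hf in Hu. subst. exact Hx.
Qed.

Lemma nth_error_firstn_skipn_middle (A : list atom) d B :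
  nth_error (A ++ d :: B) (length A) = Some d /\
  firstn (length A) (A ++ d :: B) = A /\ skipn (S (length A)) (A ++ d :: B) = B.
Proof.
  induction A as [|a A IH]; simpl; auto. destruct IH as [H1 [H2 H3]]. rewrite H2. auto.
Qed.

(* Safety at work: a variable of a disequation of the renamed body is either an input
   variable of the head, grounded by the mgu, or local to the disequation, hence fresh. *)
Lemma body_diseq_var_private M p ts G R C r th A l t1 t2 y :
  atom_satisfies M (APred p ts) -> clause_safe M C -> renaming r ->
  disjoint (cvars (csubst r C)) (gvars (APred p ts :: G ++ R)) -> hd_pred C = p ->
  is_mgu th ts (hd_args (csubst r C)) -> bd (csubst r C) = A ++ ANeq t1 t2 :: l ->
  In y (tvars t1 ++ tvars t2) ->
  (forall x, ~ In x (tvars (th y))) \/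
  (~ In y (lvars ts ++ lvars (hd_args (csubst r C))) /\ ~ In y (gvars (A ++ (l ++ G) ++ R))).
Proof.
  intros Hsat Hsafe [f [Hr [Hfi _]]] Hd Hp [Hu _] Hbd Hy.
  apply gsubst_eq_app_neq in Hbd as [A0 [l0 [s1 [s2 [Hbd [<- [<- [<- <-]]]]]]]].
  assert (Hyu : exists u, In u (tvars s1 ++ tvars s2) /\ y = f u).
  { apply in_app_or in Hy as [Hy|Hy]; apply in_tvars_tsubst in Hy as [u [Hu' Hy]];
      rewrite Hr in Hy; destruct Hy as [<-|[]]; exists u; rewrite in_app_iff; auto. }
  destruct Hyu as [u [Hu' ->]].
  destruct (nth_error_firstn_skipn_middle A0 (ANeq s1 s2) l0) as [Hnth [Hfirst Hskip]].
  rewrite <- Hbd in Hnth, Hfirst, Hskip.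
  destruct (Hsafe _ _ _ Hnth u Hu') as [[ms [Hms Hin]]|Hloc]; [left|right].
  - rewrite Hp in Hms. apply (mgu_grounds_input_vars M p ts _ ms th (f u) Hsat Hms Hu).
    unfold input_vars in *. simpl. rewrite input_args_map. apply in_lvars_subst.
    exists u. rewrite Hr. simpl. auto.
  - rewrite Hfirst, Hskip in Hloc. unfold hd in Hloc. simpl in Hloc.
    assert (HfC : In (f u) (cvars (csubst r C))).
    { apply (in_cvars_renaming C r f); auto. exists u. split; auto.
      apply in_cvars_bd. rewrite Hbd, in_gvars_app, in_gvars_cons. auto. }
    pose proof (Hd _ HfC) as Hfresh. rewrite in_gvars_cons, in_gvars_app in Hfresh.
    split.
    + rewrite in_app_iff. intros [Hin|Hin]; [tauto|].
      apply (in_lvars_renamed r f) in Hin; auto. apply Hloc, in_app_iff. auto.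
    + rewrite !in_gvars_app. intros [Hin|[[Hin|Hin]|Hin]]; try tauto;
        apply (in_gvars_renamed r f) in Hin; auto; apply Hloc; rewrite !in_app_iff; auto.
Qed.

Lemma app_eq_app_cons (X Y A B : list atom) d : X ++ Y = A ++ d :: B ->
  (exists l, A = X ++ l /\ Y = l ++ d :: B) \/ (exists l, X = A ++ d :: l /\ B = l ++ Y).
Proof.
  intros H. apply app_eq_app in H as [l [[H1 H2]|[H1 H2]]].
  - destruct l as [|d' l]; simpl in H2.
    + left. exists []. rewrite app_nil_r in *. subst. auto.
    + injection H2 as -> ->. right. exists l. auto.
  - left. exists l. auto.
Qed.

Lemma private_diseqs_res M P p ts G R C r th :
  private_diseqs (APred p ts :: G) R -> atom_satisfies M (APred p ts) -> clause_safe M C ->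
  resolves_with P p ts (G ++ R) C r th ->
  private_diseqs (gsubst th (bd (csubst r C) ++ G)) (gsubst th R).
Proof.
  intros HP Hsat Hsafe [_ [Hr [Hd [Hp Hth]]]].
  apply (private_diseqs_mgu _ _ _ _ _ Hth). intros A B t1 t2 Heq y Hy.
  apply app_eq_app_cons in Heq as [[l [-> HG]]|[l [Hbd ->]]];
    [right|eapply body_diseq_var_private; eauto].
  pose proof (HP (APred p ts :: l) B t1 t2 ltac:(rewrite HG; reflexivity) y Hy) as Hn.
  change (~ In y (gvars (APred p ts :: l ++ B ++ R))) in Hn.
  assert (HyC : ~ In y (cvars (csubst r C))).
  { intros HC. apply (Hd y HC). rewrite in_gvars_cons, in_gvars_app, HG, in_gvars_app,
      in_gvars_cons. simpl. auto. }
  rewrite in_gvars_cons, !in_gvars_app in Hn. rewrite !in_app_iff, !in_gvars_app.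
  split; [intros [Hin|Hin]|intros [[Hin|Hin]|[Hin|Hin]]]; auto using in_cvars_hd, in_cvars_bd.
Qed.

(** * Moving equations to the left *)

Definition consistent_goal (P : program) (M : mode) (G : goal) : Prop :=
  forall rest, derivation P (G :: rest) -> consistent_with M (G :: rest).

Lemma consistent_goal_step P M G G' :
  consistent_goal P M G -> step P G G' -> consistent_goal P M G'.
Proof.
  intros HC Hs rest Hd. assert (Hd' : derivation P (G :: G' :: rest)).
  { intros [|i] Hi; simpl; auto. apply Hd. simpl in *. lia. }
  intros i p ts K Hi Hn. apply (HC _ Hd' (S i) p ts K); simpl in *; auto. lia.
Qed.

Lemma consistent_goal_head P M p ts X G' :
  consistent_goal P M (APred p ts :: X) -> step P (APred p ts :: X) G' ->
  atom_satisfies M (APred p ts).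
Proof.
  intros HC Hs. apply (HC [G']) with 0 X; simpl; auto.
  intros [|i] Hi; simpl in *; auto. lia.
Qed.

Lemma resolves_with_perm P p ts G G' C r th : incl (gvars G') (gvars G) ->
  resolves_with P p ts G C r th -> resolves_with P p ts G' C r th.
Proof.
  intros HG [HC [Hr [Hd [Hp Hth]]]]. refine (conj HC (conj Hr (conj _ (conj Hp Hth)))).
  intros x Hx Hin. apply (Hd x Hx). rewrite in_gvars_cons in *. intuition.
Qed.

Lemma step_cons_app P a L X G' : step P (a :: L ++ X) G' ->
  exists L' th, G' = L' ++ gsubst th X /\
    forall Y, incl (gvars Y) (gvars X) -> step P (a :: L ++ Y) (L' ++ gsubst th Y).
Proof.
  intros Hs. inversion Hs as [? ? ? th Hth|? ? ? Hn|? ? ? C rho th HC Hrho Hd Hp Hth]; subst.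
  - exists (gsubst th L), th. split; [apply gsubst_app|]. intros Y _.
    rewrite <- gsubst_app. apply step_eq; auto.
  - exists L, Var. rewrite gsubst_Var. split; auto.
    intros Y _. rewrite gsubst_Var. apply step_neq; auto.
  - exists (gsubst th (bd (csubst rho C) ++ L)), th. rewrite <- gsubst_app, app_assoc.
    split; auto. intros Y HY. rewrite <- gsubst_app, <- app_assoc. apply step_res; auto.
    intros x Hx Hin. apply (Hd x Hx). rewrite in_gvars_cons, in_gvars_app in *.
    destruct Hin as [|[|Hin]]; auto.
Qed.

Lemma succeeds_cons_app_transfer P a L X Y n k : incl (gvars Y) (gvars X) ->
  (forall L' th k',
     (forall Z, incl (gvars Z) (gvars X) -> step P (a :: L ++ Z) (L' ++ gsubst th Z)) ->
     succeeds P (L' ++ gsubst th X) n k' -> succeeds P (L' ++ gsubst th Y) n k') ->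
  succeeds P (a :: L ++ X) (S n) k -> succeeds P (a :: L ++ Y) (S n) k.
Proof.
  intros HYX Htr HS. inversion HS as [|? G' ? k' Hs HS']; subst.
  destruct (step_cons_app _ _ _ _ _ Hs) as [L' [th [-> Hst]]].
  replace (starts_nonbasic (a :: L ++ X)) with (starts_nonbasic (a :: L ++ Y))
    by (destruct a; reflexivity).
  econstructor; [apply Hst; auto|]. apply Htr; auto.
Qed.

Section MoveEqs.

Variables (P : program) (M : mode).
Hypothesis Hsafe : program_safe M P.

Definition move_eqs_at (n : nat) : Prop :=
  forall G1 Eqs G2 k, all_eqs Eqs -> private_diseqs G1 (Eqs ++ G2) -> consistent_goal P M G1 ->
  succeeds P (G1 ++ Eqs ++ G2) n k <-> succeeds P (Eqs ++ G1 ++ G2) n k.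

Lemma move_eqs_res n p ts G1 Eqs G2 k : move_eqs_at n -> all_eqs Eqs ->
  private_diseqs (APred p ts :: G1) (Eqs ++ G2) -> consistent_goal P M (APred p ts :: G1) ->
  succeeds P (APred p ts :: G1 ++ Eqs ++ G2) (S n) k <->
  succeeds P (Eqs ++ APred p ts :: G1 ++ G2) (S n) k.
Proof.
  intros IH HE HP HC. rewrite succeeds_res_iff, succeeds_eqs_res by auto.
  assert (Hvars : forall x, In x (gvars (G1 ++ Eqs ++ G2)) <-> In x (gvars (Eqs ++ G1 ++ G2)))
    by (intros x; rewrite !in_gvars_app; tauto).
  assert (Key : forall C r th k', resolves_with P p ts (G1 ++ Eqs ++ G2) C r th ->
    succeeds P (gsubst th (bd (csubst r C) ++ G1 ++ Eqs ++ G2)) n k' <->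
    succeeds P (gsubst th (Eqs ++ bd (csubst r C) ++ G1 ++ G2)) n k').
  { intros C r th k' Hres. pose proof Hres as [HPC [Hr [Hd [Hp Hth]]]].
    assert (Hs : step P (APred p ts :: G1) (gsubst th (bd (csubst r C) ++ G1))).
    { subst p. apply step_res; auto. intros x Hx Hin. apply (Hd x Hx).
      rewrite in_gvars_cons, in_gvars_app in *. tauto. }
    pose proof (IH (gsubst th (bd (csubst r C) ++ G1)) (gsubst th Eqs) (gsubst th G2) k') as HH.
    rewrite <- !gsubst_app, <- !app_assoc in HH. apply HH.
    - apply all_eqs_gsubst; auto.
    - eapply private_diseqs_res; [exact HP|eapply consistent_goal_head; eauto|auto|].
      apply (resolves_with_perm _ _ _ (G1 ++ Eqs ++ G2)); [|exact Hres].
      intros x. rewrite !in_gvars_app. tauto.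
    - eapply consistent_goal_step; eauto. }
  split; intros [n' [k' [C [r [th [Hn [-> [Hres HS]]]]]]]]; injection Hn as <-;
    exists n, k', C, r, th; (split; [reflexivity|split; [reflexivity|]]).
  - split; [|apply Key; auto]. revert Hres. apply resolves_with_perm. intros x. apply Hvars.
  - assert (Hres' : resolves_with P p ts (G1 ++ Eqs ++ G2) C r th)
      by (revert Hres; apply resolves_with_perm; intros x; apply Hvars).
    split; [exact Hres'|]. apply Key; auto.
Qed.

Lemma move_eqs n : move_eqs_at n.
Proof.
  induction n as [|n IH]; intros [|a G1] Eqs G2 k HE HP HC; try reflexivity.
  { split; intros H; inversion H; destruct Eqs; discriminate. }
  destruct a as [u1 u2|t1 t2|p ts]; simpl.
  - rewrite succeeds_eqs_eq by auto. apply succeeds_eq_cong. intros th n' Hn Hth.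
    injection Hn as <-. rewrite !gsubst_app. apply IH.
    + apply all_eqs_gsubst; auto.
    + rewrite <- gsubst_app. eapply private_diseqs_eq; eauto.
    + eapply consistent_goal_step; eauto. apply step_eq; auto.
  - rewrite succeeds_eqs_neq by (auto; eapply private_diseqs_head; eauto).
    assert (IH' : ~ unifiable [t1] [t2] ->
      succeeds P (G1 ++ Eqs ++ G2) n k <-> succeeds P (Eqs ++ G1 ++ G2) n k).
    { intros Hu. apply IH; [auto|eapply private_diseqs_tail; eauto|].
      eapply consistent_goal_step; eauto. apply step_neq; auto. }
    rewrite !succeeds_neq_iff.
    split; intros [n' [Hn [Hu HS]]]; injection Hn as <-; exists n;
      (split; [reflexivity|split; [exact Hu|]]); apply (IH' Hu); exact HS.
  - apply move_eqs_res; auto.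
Qed.

(* Steps on the prefix [G0] act identically on both goals. *)
Lemma move_eqs_under_prefix n G0 G1 Eqs G2 k : all_eqs Eqs -> no_diseqs G1 ->
  consistent_goal P M (G0 ++ G1) ->
  succeeds P (G0 ++ G1 ++ Eqs ++ G2) n k <-> succeeds P (G0 ++ Eqs ++ G1 ++ G2) n k.
Proof.
  revert G0 G1 Eqs G2 k. induction n as [|n IH]; intros [|a G0] G1 Eqs G2 k HE HN HC;
    simpl in *; try (apply move_eqs; auto using private_diseqs_of_no_diseqs).
  { split; intros H; inversion H. }
  assert (Htr : forall X Y, incl (gvars Y) (gvars X) -> incl (gvars G1) (gvars X) ->
    (forall L' th k', consistent_goal P M (L' ++ gsubst th G1) ->
       succeeds P (L' ++ gsubst th X) n k' -> succeeds P (L' ++ gsubst th Y) n k') ->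
    succeeds P (a :: G0 ++ X) (S n) k -> succeeds P (a :: G0 ++ Y) (S n) k).
  { intros X Y HYX HG1 Hrec. apply succeeds_cons_app_transfer; auto.
    intros L' th k' Hst. apply Hrec. eapply consistent_goal_step; [exact HC|]. apply Hst; auto. }
  assert (Hrec : forall L' th k', consistent_goal P M (L' ++ gsubst th G1) ->
    succeeds P (L' ++ gsubst th (G1 ++ Eqs ++ G2)) n k' <->
    succeeds P (L' ++ gsubst th (Eqs ++ G1 ++ G2)) n k').
  { intros L' th k' HC'. rewrite !gsubst_app.
    apply IH; auto using all_eqs_gsubst, no_diseqs_gsubst. }
  split; apply Htr; try (intros x; rewrite !in_gvars_app; tauto);
    intros L' th k' HC'; apply Hrec; auto.
Qed.

End MoveEqs.

Theorem lemma7 (P : program) (M : mode) (Eqs G0 G1 G2 : goal) :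
  mode_for_program M P ->
  program_safe M P ->
  program_satisfies P M ->
  (forall a, In a Eqs -> exists t1 t2, a = AEq t1 t2) ->
  (forall t1 t2, ~ In (ANeq t1 t2) G1) ->
  (forall rest, derivation P ((G0 ++ G1) :: rest) ->
                consistent_with M ((G0 ++ G1) :: rest)) ->
  (steps P (G0 ++ G1 ++ Eqs ++ G2) [] <-> steps P (G0 ++ Eqs ++ G1 ++ G2) []) /\
  mu P (G0 ++ G1 ++ Eqs ++ G2) = mu P (G0 ++ Eqs ++ G1 ++ G2) /\
  nu P (G0 ++ G1 ++ Eqs ++ G2) = nu P (G0 ++ Eqs ++ G1 ++ G2).
Proof.
  intros _ Hsafe _ HE HN HC.
  assert (Hmove : forall n k, succeeds P (G0 ++ G1 ++ Eqs ++ G2) n k <->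
                              succeeds P (G0 ++ Eqs ++ G1 ++ G2) n k)
    by (intros; apply (move_eqs_under_prefix P M Hsafe); auto).
  rewrite !steps_nil_iff_succeeds, !mu_succeeds, !nu_succeeds.
  split; [|split].
  - split; intros [n [k H]]; exists n, k; apply Hmove; exact H.
  - apply min_of_ext. intros k. split; intros [n H]; exists n; apply Hmove; exact H.
  - apply min_of_ext. intros n. split; intros [k H]; exists k; apply Hmove; exact H.
Qed.
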